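(* For every $j\in\{0,\dots,m-1\}$ and every $k\ge1$, $$\mathcal L_\Delta^{k}(h_j)=\Big(\int_{\Omega_{j+k \bmod m}}\mathcal L_\Delta^{k}(\mathbf 1)\,d\nu_{j+k \bmod m}\Big)\,h_{j+k \bmod m}.$$
   Context: Let $\mathcal V=\{1,\dots,\ell\}$ and let $A$ be an irreducible aperiodic $\{0,1\}$-matrix. Let $\Sigma_A^+=\{x\in\mathcal V^{\mathbb N}: A(x_{i-1},x_i)=1\ \forall i\ge1\}$ with the shift $T(x)_n=x_{n+1}$. Potential. Let $\phi$ be a real Hölder continuous function, normalised so that $\mathcal L_\phi\mathbf 1=\mathbf 1$, where $(\mathcal L_\phi\psi)(x)=\sum_{Ty=x}e^{\phi(y)}\psi(y)$. Subsystem. Let $\Delta\subsetneq\mathcal V$ with $\Sigma_\Delta=\{x: x_i\in\Delta\ \forall i\}$, such that the restriction of $A$ to $\Delta\times\Delta$ is irreducible with period $m\ge2$. Let $\Delta=\Delta_0\cup\dots\cup\Delta_{m-1}$ be the cyclic decomposition into disjoint sets such that $i\in\Delta_s$, $i'\in\Delta_{s'}$ and $A(i,i')=1$ imply $s'\equiv s+1\pmod m$. Indices are taken mod $m$. Define $\Omega_j=\{x\in\Sigma_\Delta: x_0\in\Delta_j\}$. Let $P_\Delta$ be the pressure of $\phi|_{\Sigma_\Delta}$ with respect to $T|_{\Sigma_\Delta}$. Operators. Define $\mathcal L_\Delta\psi=\mathcal L_\phi(\psi\chi_\Delta)$, where $\chi_\Delta$ is the indicator of $\{x_0\in\Delta\}$.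 Write $S_m\phi=\sum_{i=0}^{m-1}\phi\circ T^i$, and define $(\mathcal L^{(m)}_j\psi)(x)=\sum e^{S_m\phi(y)}\psi(y)$ over $y$ with $T^my=x$ and $y_s\in\Delta_{j+s}$ for $0\le s\le m-1$. Functions $h_j$. Let $h_j=\lim_n e^{-nmP_\Delta}(\mathcal L^{(m)}_j)^n\mathbf 1$ (a uniform limit on $\Sigma_A^+$). Measures $\nu_j$. Let $\nu_j$ be the unique Borel probability supported on $\Omega_j$ with $\int\mathcal L^{(m)}_j\psi\,d\nu_j=e^{mP_\Delta}\int\psi\,d\nu_j$ for all continuous $\psi$. *)

From Stdlib Require Import Reals Lra Lia List Arith Bool ClassicalEpsilon.
Import ListNotations.
Open Scope R_scope.

(* Alphabet V = {0,...,l-1} (the paper's {1,...,l}, shifted by one).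
   Points of the one-sided shift are sequences nat -> nat. *)
Definition seqn := nat -> nat.

Definition shift (x : seqn) : seqn := fun n => x (S n).

Definition prep (w : list nat) (x : seqn) : seqn :=
  fun i => if Nat.ltb i (length w) then nth i w 0%nat else x (i - length w)%nat.

Definition agree (x y : seqn) (N : nat) : Prop := forall i, (i < N)%nat -> x i = y i.

Definition InSigmaA (l : nat) (A : nat -> nat -> bool) (x : seqn) : Prop :=
  forall i, (x i < l)%nat /\ A (x i) (x (S i)) = true.

Definition InSigmaD l A (Delta : nat -> bool) (x : seqn) : Prop :=
  InSigmaA l A x /\ forall i, Delta (x i) = true.

(* Omega_j = { x in Sigma_Delta : x_0 in Delta_j },  Delta_s = {i in Delta : cls i = s} *)
Definition InOmega l A Delta (cls : nat -> nat) (j : nat) (x : seqn) : Prop :=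
  InSigmaD l A Delta x /\ cls (x 0%nat) = j.

Definition path_in (l : nat) (A : nat -> nat -> bool) (D : nat -> bool) (i j n : nat) : Prop :=
  exists w : seqn, w 0%nat = i /\ w n = j /\
    (forall t, (t <= n)%nat -> (w t < l)%nat /\ D (w t) = true) /\
    (forall t, (t < n)%nat -> A (w t) (w (S t)) = true).

Definition irreducible l A (D : nat -> bool) : Prop :=
  forall i j, D i = true -> D j = true -> exists n, (1 <= n)%nat /\ path_in l A D i j n.

Definition is_period l A (D : nat -> bool) (i d : nat) : Prop :=
  (forall n, (1 <= n)%nat -> path_in l A D i i n -> Nat.divide d n) /\
  (forall d', (forall n, (1 <= n)%nat -> path_in l A D i i n -> Nat.divide d' n) ->
              Nat.divide d' d).

Definition fullV (l : nat) : nat -> bool := fun a => Nat.ltb a l.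

Definition aperiodic l A : Prop := forall i, (i < l)%nat -> is_period l A (fullV l) i 1.

Fixpoint lsum {T : Type} (f : T -> R) (L : list T) : R :=
  match L with nil => 0 | a :: L' => f a + lsum f L' end.

Fixpoint words (l n : nat) : list (list nat) :=
  match n with
  | O => [nil]
  | S n' => flat_map (fun a => map (cons a) (words l n')) (seq 0 l)
  end.

Definition birkhoff (phi : seqn -> R) (n : nat) (x : seqn) : R :=
  lsum (fun i => phi (Nat.iter i shift x)) (seq 0 n).

Definition adm (A : nat -> nat -> bool) (w : list nat) (x : seqn) : bool :=
  forallb (fun i => A (prep w x i) (prep w x (S i))) (seq 0 (length w)).

(* generic transfer operator over inverse branches of T^n:
   (psi |-> sum_{y in Sigma_A^+, T^n y = x, cond (y_0..y_{n-1})} e^{S_n phi(y)} psi(y)) *)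
Definition Lgen (l : nat) (A : nat -> nat -> bool) (phi : seqn -> R) (n : nat)
  (cond : list nat -> bool) (psi : seqn -> R) (x : seqn) : R :=
  lsum (fun w => if adm A w x && cond w
                 then exp (birkhoff phi n (prep w x)) * psi (prep w x) else 0)
       (words l n).

Definition Lphi l A phi (psi : seqn -> R) : seqn -> R :=
  Lgen l A phi 1 (fun _ => true) psi.

Definition one : seqn -> R := fun _ => 1.

Definition chi (Delta : nat -> bool) (y : seqn) : R := if Delta (y 0%nat) then 1 else 0.

Definition LDelta l A phi Delta (psi : seqn -> R) : seqn -> R :=
  Lphi l A phi (fun y => psi y * chi Delta y).

Definition Lm l A phi (Delta : nat -> bool) (cls : nat -> nat) (m j : nat)
  (psi : seqn -> R) : seqn -> R :=
  Lgen l A phi m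
    (fun w => forallb (fun s => Delta (nth s w 0%nat) &&
                                Nat.eqb (cls (nth s w 0%nat)) ((j + s) mod m))
                      (seq 0 m)) psi.

Definition opiter (Op : (seqn -> R) -> (seqn -> R)) (k : nat) (psi : seqn -> R) :=
  Nat.iter k Op psi.

(* Hoelder continuity w.r.t. the usual metric d(x,y) = theta^{n(x,y)} *)
Definition holder l A (phi : seqn -> R) : Prop :=
  exists C theta, 0 < theta < 1 /\
    forall x y n, InSigmaA l A x -> InSigmaA l A y -> agree x y n ->
      Rabs (phi x - phi y) <= C * theta ^ n.

Definition cont_on l A (f : seqn -> R) : Prop :=
  forall x eps, InSigmaA l A x -> 0 < eps ->
    exists N, forall y, InSigmaA l A y -> agree x y N -> Rabs (f x - f y) < eps.

Definition sup_of (E : R -> Prop) : R := epsilon (inhabits 0) (fun s => is_lub E s).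

Definition cyl (w : list nat) (x : seqn) : Prop :=
  forall i, (i < length w)%nat -> x i = nth i w 0%nat.

Definition Zn l A Delta (phi : seqn -> R) (n : nat) : R :=
  lsum (fun w =>
    if excluded_middle_informative (exists x, InSigmaD l A Delta x /\ cyl w x)
    then exp (sup_of (fun r => exists x, InSigmaD l A Delta x /\ cyl w x /\
                                         r = birkhoff phi n x))
    else 0) (words l n).

Definition is_pressure l A Delta phi (P : R) : Prop :=
  Un_cv (fun n => ln (Zn l A Delta phi n) / INR n) P.

(* A Borel probability measure on the compact metric space Sigma_A^+, represented
   (Riesz) by its integration functional on continuous functions. *)
Definition prob_functional l A (nu : (seqn -> R) -> R) : Prop :=
  (forall f g, cont_on l A f -> cont_on l A g -> nu (fun x => f x + g x) = nu f + nu g) /\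
  (forall c f, cont_on l A f -> nu (fun x => c * f x) = c * nu f) /\
  (forall f, cont_on l A f -> (forall x, InSigmaA l A x -> 0 <= f x) -> 0 <= nu f) /\
  nu one = 1.

Definition supported_on_Omega l A Delta cls j (nu : (seqn -> R) -> R) : Prop :=
  forall f, cont_on l A f -> (forall x, InOmega l A Delta cls j x -> f x = 0) -> nu f = 0.

From Stdlib Require Import Reals List Lia Lra Bool FunctionalExtensionality
  ClassicalEpsilon Classical.
Import ListNotations.
Open Scope R_scope.

(* Let lam = e^{mP}, i = (j + k) mod m and u = L_Delta^k h_j.  The proof has four steps.
   1. All operators involved are instances of one restricted transfer operator Lgen, a sum
      over the inverse branches w of T^n (letters subject to a condition) of e^{S_n phi} f(wx).
      Two of them compose to a third one (Lgen_comp); hence L_Delta^k and (L^(m)_j)^n are of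
      this form, and the cyclic structure of Delta yields the commutation relation
      L^(m)_i o L_Delta^k = L_Delta^k o L^(m)_j (commute_iter).
   2. Passing to the limit in the definition of h_j, h_j is continuous, nonnegative, bounded,
      positive somewhere on Omega_j, with L^(m)_j h_j = lam h_j and nu_j(h_j) = 1.  So u is a
      nonnegative continuous lam-eigenfunction of L^(m)_i.
   3. Perron-Frobenius uniqueness (eigen_unique): such an eigenfunction is t h_i.  With t
      maximal such that t h_i <= u on Omega_i, g = u - t h_i has infimum 0 on Omega_i; a Harnack
      inequality and irreducibility of A|Delta give g = 0 on Omega_i, and since all inverse
      branches of L^(m)_i land exponentially close to Omega_i, uniform continuity (compactness
      of Sigma_A^+) and the growth bound L_i^n 1 = O(lam^n) give g = 0 everywhere.
   4. Integrating against nu_i: t = nu_i(u) = nu_i(L_Delta^k 1), the last step again by the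
      commutation relation, the eigen-equation of nu_i and the limit defining h_j. *)

(** * Finite sums *)

Lemma lsum_app {T} (f : T -> R) L1 L2 : lsum f (L1 ++ L2) = lsum f L1 + lsum f L2.
Proof. induction L1; simpl; [lra | rewrite IHL1; lra]. Qed.

Lemma lsum_plus {T} (f g : T -> R) L : lsum (fun x => f x + g x) L = lsum f L + lsum g L.
Proof. induction L; simpl; [lra | rewrite IHL; lra]. Qed.

Lemma lsum_scal {T} (f : T -> R) c L : lsum (fun x => c * f x) L = c * lsum f L.
Proof. induction L; simpl; [lra | rewrite IHL; lra]. Qed.

Lemma lsum_zero {T} (L : list T) : lsum (fun _ => 0) L = 0.
Proof. induction L; simpl; [lra | rewrite IHL; lra]. Qed.

Lemma lsum_ext_in {T} (f g : T -> R) L :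
  (forall x, In x L -> f x = g x) -> lsum f L = lsum g L.
Proof. induction L; simpl; intros H; [lra|]. rewrite H, IHL; auto. Qed.

Lemma lsum_le_in {T} (f g : T -> R) L :
  (forall x, In x L -> f x <= g x) -> lsum f L <= lsum g L.
Proof.
  induction L; simpl; intros H; [lra|].
  pose proof (H a (or_introl eq_refl)).
  assert (lsum f L <= lsum g L) by (apply IHL; auto). lra.
Qed.

Lemma lsum_nonneg {T} (f : T -> R) L : (forall x, In x L -> 0 <= f x) -> 0 <= lsum f L.
Proof. intros H. rewrite <- (lsum_zero L). apply lsum_le_in; auto. Qed.

Lemma lsum_ge_term {T} (f : T -> R) L a :
  (forall x, In x L -> 0 <= f x) -> In a L -> f a <= lsum f L.
Proof.
  induction L; simpl; intros H Ha; [tauto|]. destruct Ha as [->|Ha].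
  - assert (0 <= lsum f L) by (apply lsum_nonneg; auto). lra.
  - assert (f a <= lsum f L) by (apply IHL; auto).
    specialize (H a0 (or_introl eq_refl)). lra.
Qed.

Lemma lsum_abs {T} (f : T -> R) L : Rabs (lsum f L) <= lsum (fun x => Rabs (f x)) L.
Proof.
  induction L; simpl.
  - rewrite Rabs_R0; lra.
  - eapply Rle_trans; [apply Rabs_triang | lra].
Qed.

Lemma lsum_map {T U} (f : U -> R) (g : T -> U) L : lsum f (map g L) = lsum (fun x => f (g x)) L.
Proof. induction L; simpl; [lra | rewrite IHL; lra]. Qed.

Lemma lsum_flat_map {T U} (f : U -> R) (g : T -> list U) L :
  lsum f (flat_map g L) = lsum (fun a => lsum f (g a)) L.
Proof. induction L; simpl; [lra | rewrite lsum_app, IHL; lra]. Qed.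

Lemma lsum_swap {T U} (G : T -> U -> R) L1 L2 :
  lsum (fun a => lsum (fun b => G a b) L2) L1 = lsum (fun b => lsum (fun a => G a b) L1) L2.
Proof.
  induction L1; simpl.
  - rewrite lsum_zero; lra.
  - rewrite IHL1, <- lsum_plus. reflexivity.
Qed.

Lemma lsum_seq_shift (f : nat -> R) s a :
  lsum f (seq s a) = lsum (fun i => f (s + i)%nat) (seq 0 a).
Proof.
  revert s f; induction a; intros s f; simpl; [lra|].
  rewrite IHa, (IHa 1%nat). replace (s + 0)%nat with s by lia.
  f_equal. apply lsum_ext_in. intros; f_equal; lia.
Qed.

Lemma lsum_const_seq c s n : lsum (fun _ => c) (seq s n) = INR n * c.
Proof.
  revert s; induction n; intros s; [simpl; ring|].
  rewrite S_INR. cbn [seq lsum]. rewrite IHn. ring.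
Qed.

Lemma forallb_ext_in {T} (f g : T -> bool) L :
  (forall x, In x L -> f x = g x) -> forallb f L = forallb g L.
Proof. induction L; simpl; intros H; auto. rewrite H, IHL; auto. Qed.

Lemma forallb_seq_shift (f : nat -> bool) s a :
  forallb f (seq s a) = forallb (fun i => f (s + i)%nat) (seq 0 a).
Proof.
  revert s f; induction a; intros s f; simpl; auto.
  rewrite IHa, (IHa 1%nat). replace (s + 0)%nat with s by lia. f_equal.
  apply forallb_ext_in. intros; f_equal; lia.
Qed.

(** * Words, concatenation of inverse branches, Birkhoff sums *)

Lemma In_words l n w : In w (words l n) <-> (length w = n /\ forall a, In a w -> (a < l)%nat).
Proof.
  revert w; induction n; intros w; simpl.
  - split.
    + intros [<-|[]]; simpl; split; auto; tauto.
    + intros [H _]. destruct w; simpl in *; [auto | lia].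
  - rewrite in_flat_map. split.
    + intros [a [Ha Hw]]. apply in_map_iff in Hw. destruct Hw as [w' [<- Hw']].
      apply IHn in Hw' as [H1 H2]. apply in_seq in Ha. simpl. split; [lia|].
      intros b [<-|Hb]; [lia | auto].
    + intros [H1 H2]. destruct w as [|a w']; simpl in H1; [lia|]. exists a. split.
      * apply in_seq. specialize (H2 a (or_introl eq_refl)). lia.
      * apply in_map, IHn. split; [lia|]. intros; apply H2; simpl; auto.
Qed.

Lemma words_length l n w : In w (words l n) -> length w = n.
Proof. intros H. apply In_words in H. tauto. Qed.

Lemma lsum_words_app l b a (F : list nat -> R) :
  lsum F (words l (b + a)) = lsum (fun v => lsum (fun u => F (v ++ u)) (words l a)) (words l b).
Proof.
  revert F; induction b; intros F; simpl.
  - rewrite Rplus_0_r; reflexivity.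
  - rewrite !lsum_flat_map. apply lsum_ext_in. intros c _. rewrite !lsum_map.
    apply (IHb (fun w => F (c :: w))).
Qed.

Lemma iter_shift i (z : seqn) t : Nat.iter i shift z t = z (i + t)%nat.
Proof.
  revert t; induction i; intros t; simpl; auto.
  unfold shift at 1. rewrite IHi. f_equal; lia.
Qed.

Lemma prep_nth w x i : (i < length w)%nat -> prep w x i = nth i w 0%nat.
Proof. intros H. unfold prep. destruct (Nat.ltb_spec i (length w)); [auto | lia]. Qed.

Lemma prep_tail w x t : prep w x (length w + t)%nat = x t.
Proof.
  unfold prep. destruct (Nat.ltb_spec (length w + t) (length w)); [lia|]. f_equal; lia.
Qed.

Lemma prep_nil x : prep [] x = x.
Proof. apply functional_extensionality; intros i. apply (prep_tail [] x i). Qed.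

Lemma prep_app v u x : prep (v ++ u) x = prep v (prep u x).
Proof.
  apply functional_extensionality; intros i. unfold prep. rewrite length_app.
  destruct (Nat.ltb_spec i (length v)).
  - destruct (Nat.ltb_spec i (length v + length u)); [|lia]. apply app_nth1; auto.
  - destruct (Nat.ltb_spec (i - length v) (length u)).
    + destruct (Nat.ltb_spec i (length v + length u)); [|lia]. apply app_nth2; auto.
    + destruct (Nat.ltb_spec i (length v + length u)); [lia|]. f_equal; lia.
Qed.

Lemma iter_shift_prep v y : Nat.iter (length v) shift (prep v y) = y.
Proof.
  apply functional_extensionality; intros t. rewrite iter_shift. apply prep_tail.
Qed.

Lemma birkhoff_app phi b a z :
  birkhoff phi (b + a) z = birkhoff phi b z + birkhoff phi a (Nat.iter b shift z).
Proof.
  unfold birkhoff. rewrite seq_app, lsum_app. f_equal. simpl.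
  rewrite lsum_seq_shift. apply lsum_ext_in. intros i _. f_equal.
  rewrite Nat.add_comm, Nat.iter_add. reflexivity.
Qed.

Lemma adm_app A v u x : adm A (v ++ u) x = adm A v (prep u x) && adm A u x.
Proof.
  unfold adm. rewrite prep_app, length_app, seq_app, forallb_app. f_equal.
  simpl. rewrite forallb_seq_shift. apply forallb_ext_in. intros i _.
  replace (S (length v + i)) with (length v + S i)%nat by lia.
  rewrite !prep_tail. reflexivity.
Qed.

Lemma adm_step A w x s : adm A w x = true -> (S s < length w)%nat ->
  A (nth s w 0%nat) (nth (S s) w 0%nat) = true.
Proof.
  intros H Hs. unfold adm in H. rewrite forallb_forall in H.
  specialize (H s). rewrite !prep_nth in H by lia. apply H, in_seq. lia.
Qed.

(** * Transfer operators over inverse branches *)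

Definition letters_ok (P : nat -> nat -> bool) (n : nat) (w : list nat) : bool :=
  forallb (fun s => P s (nth s w 0%nat)) (seq 0 n).

Definition cond_concat (b : nat) (P2 P1 : nat -> nat -> bool) : nat -> nat -> bool :=
  fun s c => if Nat.ltb s b then P2 s c else P1 (s - b)%nat c.

Lemma letters_ok_iff P n w :
  letters_ok P n w = true <-> forall s, (s < n)%nat -> P s (nth s w 0%nat) = true.
Proof.
  unfold letters_ok. rewrite forallb_forall.
  split; intros H s Hs; apply H; [apply in_seq | apply in_seq in Hs]; lia.
Qed.

Lemma letters_ok_ext P Q n w :
  (forall s c, (s < n)%nat -> P s c = Q s c) -> letters_ok P n w = letters_ok Q n w.
Proof.
  intros H. unfold letters_ok. apply forallb_ext_in.
  intros s Hs. apply in_seq in Hs. apply H. lia.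
Qed.

Lemma letters_ok_app P1 P2 b a v u : length v = b ->
  letters_ok (cond_concat b P2 P1) (b + a) (v ++ u) = letters_ok P2 b v && letters_ok P1 a u.
Proof.
  intros Hv. unfold letters_ok, cond_concat. rewrite seq_app, forallb_app. f_equal.
  - apply forallb_ext_in. intros s Hs. apply in_seq in Hs.
    destruct (Nat.ltb_spec s b); [|lia]. rewrite app_nth1; [auto | lia].
  - rewrite forallb_seq_shift. apply forallb_ext_in. intros i _. simpl.
    destruct (Nat.ltb_spec (b + i) b); [lia|].
    rewrite app_nth2 by lia. rewrite Hv. replace (b + i - b)%nat with i by lia. reflexivity.
Qed.

Section Transfer.
Variables (l : nat) (A : nat -> nat -> bool) (phi : seqn -> R).

Local Notation L := (Lgen l A phi).

Lemma Lgen_comp a b P1 P2 f x :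
  L a (letters_ok P1 a) (L b (letters_ok P2 b) f) x =
  L (b + a) (letters_ok (cond_concat b P2 P1) (b + a)) f x.
Proof.
  unfold Lgen at 3. rewrite lsum_words_app. unfold Lgen at 1.
  transitivity (lsum (fun u => lsum (fun v =>
     if adm A u x && letters_ok P1 a u then exp (birkhoff phi a (prep u x)) *
       (if adm A v (prep u x) && letters_ok P2 b v
        then exp (birkhoff phi b (prep v (prep u x))) * f (prep v (prep u x)) else 0)
     else 0) (words l b)) (words l a)).
  - apply lsum_ext_in. intros u _. destruct (adm A u x && letters_ok P1 a u).
    + unfold Lgen. rewrite <- lsum_scal. reflexivity.
    + rewrite lsum_zero; reflexivity.
  - rewrite lsum_swap. apply lsum_ext_in. intros v Hv. apply lsum_ext_in. intros u Hu.
    apply words_length in Hv, Hu.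
    rewrite letters_ok_app, adm_app, prep_app, birkhoff_app by auto.
    replace (Nat.iter b shift (prep v (prep u x))) with (prep u x)
      by (rewrite <- Hv; symmetry; apply iter_shift_prep).
    destruct (adm A u x), (letters_ok P1 a u), (adm A v (prep u x)), (letters_ok P2 b v);
      simpl; try ring.
    rewrite exp_plus. ring.
Qed.

Lemma Lgen0 C f x : L 0 C f x = if C [] then f x else 0.
Proof.
  unfold Lgen, birkhoff. simpl. unfold adm. simpl. rewrite exp_0, prep_nil.
  destruct (C []); ring.
Qed.

Lemma Lgen_cond_ext n C1 C2 f x :
  (forall w, In w (words l n) -> adm A w x = true -> C1 w = C2 w) ->
  L n C1 f x = L n C2 f x.
Proof.
  intros H. unfold Lgen. apply lsum_ext_in. intros w Hw.
  destruct (adm A w x) eqn:E; simpl; auto. rewrite (H w Hw E). reflexivity.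
Qed.

Lemma Lgen_lin n C f g c x : L n C (fun y => f y + c * g y) x = L n C f x + c * L n C g x.
Proof.
  unfold Lgen. rewrite <- lsum_scal, <- lsum_plus. apply lsum_ext_in. intros w _.
  destruct (adm A w x && C w); ring.
Qed.

Lemma Lgen_scal n C f c x : L n C (fun y => c * f y) x = c * L n C f x.
Proof.
  unfold Lgen. rewrite <- lsum_scal. apply lsum_ext_in. intros w _.
  destruct (adm A w x && C w); ring.
Qed.

Lemma prep_Sigma w x n : In w (words l n) -> adm A w x = true -> InSigmaA l A x ->
  InSigmaA l A (prep w x).
Proof.
  intros Hw Ha Hx. apply In_words in Hw as [_ Hl].
  unfold adm in Ha. rewrite forallb_forall in Ha. intros i.
  destruct (Nat.lt_ge_cases i (length w)).
  - split.
    + rewrite prep_nth by auto. apply Hl, nth_In; auto.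
    + apply Ha, in_seq. lia.
  - replace i with (length w + (i - length w))%nat by lia.
    replace (S (length w + (i - length w))) with (length w + S (i - length w))%nat by lia.
    rewrite !prep_tail. apply Hx.
Qed.

Lemma Lgen_ext_Sigma n C f g x :
  (forall y, InSigmaA l A y -> f y = g y) -> InSigmaA l A x -> L n C f x = L n C g x.
Proof.
  intros H Hx. unfold Lgen. apply lsum_ext_in. intros w Hw.
  destruct (adm A w x) eqn:E; simpl; auto. rewrite H; eauto using prep_Sigma.
Qed.

Lemma Lgen_pos n C f x :
  (forall y, InSigmaA l A y -> 0 <= f y) -> InSigmaA l A x -> 0 <= L n C f x.
Proof.
  intros H Hx. unfold Lgen. apply lsum_nonneg. intros w Hw.
  destruct (adm A w x && C w) eqn:E; [|lra]. apply andb_true_iff in E as [E _].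
  apply Rmult_le_pos; [left; apply exp_pos | eauto using prep_Sigma].
Qed.

Lemma Lgen_cond_le n C f x : (forall y, InSigmaA l A y -> 0 <= f y) -> InSigmaA l A x ->
  L n C f x <= L n (fun _ => true) f x.
Proof.
  intros H Hx. unfold Lgen. apply lsum_le_in. intros w Hw.
  destruct (adm A w x) eqn:E; simpl; [|lra]. destruct (C w); [lra|].
  apply Rmult_le_pos; [left; apply exp_pos | eauto using prep_Sigma].
Qed.

Lemma Lgen_ge_branch n C f x v :
  (forall w, In w (words l n) -> adm A w x && C w = true -> 0 <= f (prep w x)) ->
  In v (words l n) -> adm A v x && C v = true ->
  exp (birkhoff phi n (prep v x)) * f (prep v x) <= L n C f x.
Proof.
  intros Hf Hv Hvc. unfold Lgen.
  set (T := fun w => if adm A w x && C w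
              then exp (birkhoff phi n (prep w x)) * f (prep w x) else 0).
  change (exp (birkhoff phi n (prep v x)) * f (prep v x) <= lsum T (words l n)).
  replace (exp (birkhoff phi n (prep v x)) * f (prep v x)) with (T v)
    by (unfold T; rewrite Hvc; reflexivity).
  apply lsum_ge_term; auto. intros w Hw. unfold T.
  destruct (adm A w x && C w) eqn:E; [|lra].
  apply Rmult_le_pos; [left; apply exp_pos | auto].
Qed.

Lemma Lgen_abs_bound n C f e x :
  (forall w, In w (words l n) -> adm A w x && C w = true -> Rabs (f (prep w x)) <= e) ->
  Rabs (L n C f x) <= e * L n C one x.
Proof.
  intros H. unfold Lgen. rewrite <- lsum_scal. eapply Rle_trans; [apply lsum_abs|].
  apply lsum_le_in. intros w Hw. destruct (adm A w x && C w) eqn:E; [|rewrite Rabs_R0; lra].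
  rewrite Rabs_mult, Rabs_pos_eq by (left; apply exp_pos). unfold one.
  specialize (H w Hw E). pose proof (exp_pos (birkhoff phi n (prep w x))). nra.
Qed.

Lemma Lgen_diff n C f g e x : (forall y, InSigmaA l A y -> Rabs (f y - g y) <= e) ->
  InSigmaA l A x -> Rabs (L n C f x - L n C g x) <= e * L n C one x.
Proof.
  intros H Hx.
  replace (L n C f x - L n C g x) with (L n C (fun y => f y + (-1) * g y) x)
    by (rewrite Lgen_lin; ring).
  apply Lgen_abs_bound. intros w Hw E. apply andb_true_iff in E as [E _].
  replace (f (prep w x) + -1 * g (prep w x)) with (f (prep w x) - g (prep w x)) by ring.
  eauto using prep_Sigma.
Qed.

Section Normalised.
Hypothesis Hnorm : forall x, InSigmaA l A x -> Lphi l A phi one x = 1.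

Lemma Lgen_norm n x : InSigmaA l A x -> L n (fun _ => true) one x = 1.
Proof.
  revert x. induction n; intros x Hx; [rewrite Lgen0; reflexivity|].
  assert (Etrue : forall k, (fun _ : list nat => true) = letters_ok (fun _ _ => true) k).
  { intros k. apply functional_extensionality; intros w. symmetry.
    apply letters_ok_iff. auto. }
  set (T := fun _ _ : nat => true).
  transitivity (L 1 (letters_ok T 1) (L n (letters_ok T n) one) x).
  - rewrite Lgen_comp. replace (S n) with (n + 1)%nat by lia.
    apply Lgen_cond_ext. intros w _ _. symmetry. apply letters_ok_iff.
    intros s _. unfold cond_concat, T. destruct (s <? n); reflexivity.
  - rewrite <- (Hnorm x Hx). unfold Lphi. rewrite <- !Etrue.
    apply Lgen_ext_Sigma; auto.
Qed.

Lemma Lgen_one_le1 n C x : InSigmaA l A x -> L n C one x <= 1.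
Proof.
  intros Hx. rewrite <- (Lgen_norm n x Hx). apply Lgen_cond_le; auto.
  intros; unfold one; lra.
Qed.

End Normalised.
End Transfer.

(** * The operators L_Delta^k and (L^(m)_j)^n, and their commutation *)

Definition in_Delta (Delta : nat -> bool) : nat -> nat -> bool := fun _ c => Delta c.
Definition in_class (Delta : nat -> bool) (cls : nat -> nat) (m j : nat) : nat -> nat -> bool :=
  fun s c => Delta c && Nat.eqb (cls c) ((j + s) mod m).

Lemma LDelta_as_Lgen l A phi Delta :
  LDelta l A phi Delta = Lgen l A phi 1 (letters_ok (in_Delta Delta) 1).
Proof.
  apply functional_extensionality; intros f. apply functional_extensionality; intros x.
  unfold LDelta, Lphi, Lgen. apply lsum_ext_in. intros w Hw. apply words_length in Hw.
  destruct w as [|a [|b w]]; simpl in Hw; try lia.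
  unfold letters_ok, in_Delta, chi. simpl. rewrite prep_nth by (simpl; lia). simpl.
  destruct (adm A [a] x), (Delta a); simpl; ring.
Qed.

Lemma opiter_LDelta l A phi Delta k :
  opiter (LDelta l A phi Delta) k = Lgen l A phi k (letters_ok (in_Delta Delta) k).
Proof.
  apply functional_extensionality; intros f. apply functional_extensionality; intros x.
  revert x. induction k; intros x; [rewrite Lgen0; reflexivity|].
  change (LDelta l A phi Delta (opiter (LDelta l A phi Delta) k f) x =
          Lgen l A phi (S k) (letters_ok (in_Delta Delta) (S k)) f x).
  replace (opiter (LDelta l A phi Delta) k f)
    with (Lgen l A phi k (letters_ok (in_Delta Delta) k) f)
    by (apply functional_extensionality; intros y; symmetry; apply IHk).
  rewrite LDelta_as_Lgen, Lgen_comp. replace (S k) with (k + 1)%nat by lia.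
  apply Lgen_cond_ext. intros w _ _. apply letters_ok_ext. intros s c _.
  unfold cond_concat, in_Delta. destruct (s <? k); reflexivity.
Qed.

Lemma Lm_as_Lgen l A phi Delta cls m j :
  Lm l A phi Delta cls m j = Lgen l A phi m (letters_ok (in_class Delta cls m j) m).
Proof. reflexivity. Qed.

Lemma opiter_Lm l A phi Delta cls m j n :
  opiter (Lm l A phi Delta cls m j) n =
  Lgen l A phi (n * m) (letters_ok (in_class Delta cls m j) (n * m)).
Proof.
  apply functional_extensionality; intros f. apply functional_extensionality; intros x.
  revert x. induction n; intros x; [rewrite Lgen0; reflexivity|].
  change (Lm l A phi Delta cls m j (opiter (Lm l A phi Delta cls m j) n f) x =
          Lgen l A phi (S n * m) (letters_ok (in_class Delta cls m j) (S n * m)) f x).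
  replace (opiter (Lm l A phi Delta cls m j) n f)
    with (Lgen l A phi (n * m) (letters_ok (in_class Delta cls m j) (n * m)) f)
    by (apply functional_extensionality; intros y; symmetry; apply IHn).
  rewrite Lm_as_Lgen, Lgen_comp. replace (S n * m)%nat with (n * m + m)%nat by lia.
  apply Lgen_cond_ext. intros w _ _. apply letters_ok_ext. intros s c Hs.
  unfold cond_concat, in_class. destruct (Nat.ltb_spec s (n * m)); auto.
  replace (j + s)%nat with (j + (s - n * m) + n * m)%nat by lia.
  rewrite Nat.Div0.mod_add. reflexivity.
Qed.

Section CyclicClasses.
Variables (l : nat) (A : nat -> nat -> bool) (Delta : nat -> bool) (m : nat) (cls : nat -> nat).
Hypothesis Hm : (1 <= m)%nat.
Hypothesis Hcls_rng : forall i, Delta i = true -> (cls i < m)%nat.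
Hypothesis Hcls_cyc : forall i i', Delta i = true -> Delta i' = true -> A i i' = true ->
  cls i' = ((cls i + 1) mod m)%nat.

Lemma mod_cancel a b k : (a < m)%nat -> (b < m)%nat ->
  ((a + k) mod m = (b + k) mod m)%nat -> a = b.
Proof.
  intros Ha Hb H.
  assert (H2 : ((a + k + (m * k - k)) mod m = (b + k + (m * k - k)) mod m)%nat).
  { rewrite (Nat.Div0.add_mod (a + k)), (Nat.Div0.add_mod (b + k)), H. reflexivity. }
  replace (a + k + (m * k - k))%nat with (a + k * m)%nat in H2 by nia.
  replace (b + k + (m * k - k))%nat with (b + k * m)%nat in H2 by nia.
  rewrite !Nat.Div0.mod_add, !Nat.mod_small in H2; auto.
Qed.

Lemma class_along w x : adm A w x = true ->
  (forall s, (s < length w)%nat -> Delta (nth s w 0%nat) = true) ->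
  forall s, (s < length w)%nat -> cls (nth s w 0%nat) = ((cls (nth 0 w 0%nat) + s) mod m)%nat.
Proof.
  intros Ha HD s. induction s; intros Hs.
  - rewrite Nat.add_0_r, Nat.mod_small; auto.
  - rewrite (Hcls_cyc (nth s w 0%nat)); try (apply HD; lia); [|apply adm_step with x; auto].
    rewrite IHs by lia. rewrite Nat.Div0.add_mod_idemp_l. f_equal. lia.
Qed.

Lemma class_start j w x s : (j < m)%nat -> adm A w x = true ->
  (forall s, (s < length w)%nat -> Delta (nth s w 0%nat) = true) -> (s < length w)%nat ->
  cls (nth s w 0%nat) = ((j + s) mod m)%nat <-> cls (nth 0 w 0%nat) = j.
Proof.
  intros Hj Ha HD Hs. rewrite (class_along w x Ha HD s Hs). split; intros H.
  - apply mod_cancel with s; auto. apply Hcls_rng, HD. lia.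
  - rewrite H. reflexivity.
Qed.

Lemma cond_LDelta_then_Lm j k w x : (j < m)%nat -> length w = (k + m)%nat -> adm A w x = true ->
  letters_ok (cond_concat k (in_Delta Delta) (in_class Delta cls m ((j + k) mod m))) (k + m) w
    = true
  <-> (forall s, (s < length w)%nat -> Delta (nth s w 0%nat) = true) /\ cls (nth 0 w 0%nat) = j.
Proof.
  intros Hj Hlen Ha. rewrite letters_ok_iff. unfold cond_concat, in_Delta, in_class.
  split.
  - intros H.
    assert (HD : forall s, (s < length w)%nat -> Delta (nth s w 0%nat) = true).
    { intros s Hs. specialize (H s ltac:(lia)).
      destruct (s <? k); [auto | apply andb_true_iff in H; tauto]. }
    split; auto.
    specialize (H k ltac:(lia)). rewrite Nat.ltb_irrefl in H.
    apply andb_true_iff in H as [_ H]. apply Nat.eqb_eq in H.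
    rewrite Nat.sub_diag, Nat.add_0_r, Nat.Div0.mod_mod in H.
    apply (class_start j w x k); auto. lia.
  - intros [HD H0] s Hs. destruct (Nat.ltb_spec s k); [apply HD; lia|].
    rewrite HD by lia. apply Nat.eqb_eq.
    rewrite Nat.Div0.add_mod_idemp_l. replace (j + k + (s - k))%nat with (j + s)%nat by lia.
    apply (class_start j w x s); auto. lia.
Qed.

Lemma cond_Lm_then_LDelta j k w x : (j < m)%nat -> length w = (k + m)%nat -> adm A w x = true ->
  letters_ok (cond_concat m (in_class Delta cls m j) (in_Delta Delta)) (k + m) w = true
  <-> (forall s, (s < length w)%nat -> Delta (nth s w 0%nat) = true) /\ cls (nth 0 w 0%nat) = j.
Proof.
  intros Hj Hlen Ha. rewrite letters_ok_iff. unfold cond_concat, in_Delta, in_class.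
  split.
  - intros H.
    assert (HD : forall s, (s < length w)%nat -> Delta (nth s w 0%nat) = true).
    { intros s Hs. specialize (H s ltac:(lia)).
      destruct (s <? m); [apply andb_true_iff in H; tauto | auto]. }
    split; auto.
    specialize (H 0%nat ltac:(lia)). destruct (Nat.ltb_spec 0 m); [|lia].
    apply andb_true_iff in H as [_ H]. apply Nat.eqb_eq in H.
    rewrite H, Nat.add_0_r, Nat.mod_small; auto.
  - intros [HD H0] s Hs. destruct (Nat.ltb_spec s m); [|apply HD; lia].
    rewrite HD by lia. apply Nat.eqb_eq. apply (class_start j w x s); auto. lia.
Qed.

Lemma commute_iter phi j k n f : (j < m)%nat ->
  opiter (Lm l A phi Delta cls m ((j + k) mod m)) n (opiter (LDelta l A phi Delta) k f) =
  opiter (LDelta l A phi Delta) k (opiter (Lm l A phi Delta cls m j) n f).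
Proof.
  intros Hj. induction n; [reflexivity|].
  change (Lm l A phi Delta cls m ((j + k) mod m)
            (opiter (Lm l A phi Delta cls m ((j + k) mod m)) n
               (opiter (LDelta l A phi Delta) k f)) =
          opiter (LDelta l A phi Delta) k
            (Lm l A phi Delta cls m j (opiter (Lm l A phi Delta cls m j) n f))).
  rewrite IHn. apply functional_extensionality; intros x.
  rewrite opiter_LDelta, !Lm_as_Lgen, !Lgen_comp, (Nat.add_comm m k).
  apply Lgen_cond_ext. intros w Hw Ha. apply words_length in Hw.
  apply Bool.eq_iff_eq_true.
  rewrite (cond_LDelta_then_Lm j k w x), (cond_Lm_then_LDelta j k w x) by auto.
  reflexivity.
Qed.

End CyclicClasses.

(** * Continuity on Sigma_A^+ *)

Lemma fin_bound (K : nat) (P : nat -> nat -> Prop) :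
  (forall a B B', (B <= B')%nat -> P a B -> P a B') ->
  (forall a, (a < K)%nat -> exists B, P a B) -> exists B, forall a, (a < K)%nat -> P a B.
Proof.
  intros Hmono H. induction K; [exists 0%nat; intros; lia|].
  destruct IHK as [B1 HB1]; [intros; apply H; lia|].
  destruct (H K ltac:(lia)) as [B2 HB2]. exists (max B1 B2). intros a Ha.
  destruct (Nat.eq_dec a K) as [->|].
  - eapply Hmono; [|eauto]. lia.
  - eapply Hmono; [|apply HB1; lia]. lia.
Qed.

Lemma agree_mono x y N N' : agree x y N -> (N' <= N)%nat -> agree x y N'.
Proof. intros H H' i Hi. apply H. lia. Qed.

Lemma agree_prep w x y N : agree x y N -> agree (prep w x) (prep w y) (length w + N).
Proof.
  intros H t Ht. destruct (Nat.lt_ge_cases t (length w)).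
  - rewrite !prep_nth; auto.
  - replace t with (length w + (t - length w))%nat by lia. rewrite !prep_tail. apply H. lia.
Qed.

Lemma adm_agree A w x y : agree x y 1 -> adm A w x = adm A w y.
Proof.
  intros H. unfold adm. apply forallb_ext_in. intros i Hi. apply in_seq in Hi.
  assert (E : forall t, (t <= length w)%nat -> prep w x t = prep w y t).
  { intros t Ht. destruct (Nat.lt_ge_cases t (length w)).
    - rewrite !prep_nth; auto.
    - replace t with (length w + 0)%nat by lia. rewrite !prep_tail. apply H. lia. }
  rewrite !E by lia. reflexivity.
Qed.

Lemma iter_shift_Sigma l A i z : InSigmaA l A z -> InSigmaA l A (Nat.iter i shift z).
Proof.
  intros Hz t. rewrite !iter_shift. replace (i + S t)%nat with (S (i + t)) by lia. apply Hz.
Qed.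

Section Continuity.
Variables (l : nat) (A : nat -> nat -> bool).

Definition contAt (f : seqn -> R) (p : seqn) : Prop :=
  forall eps, 0 < eps ->
    exists N, forall y, InSigmaA l A y -> agree p y N -> Rabs (f p - f y) < eps.

Lemma cont_on_iff f : cont_on l A f <-> forall p, InSigmaA l A p -> contAt f p.
Proof. split; intros H p; [intros Hp eps He | intros eps Hp He]; apply H; auto. Qed.

Lemma contAt_const c p : contAt (fun _ => c) p.
Proof. intros eps He. exists 0%nat. intros. rewrite Rminus_diag, Rabs_R0. auto. Qed.

Lemma contAt_plus f g p : contAt f p -> contAt g p -> contAt (fun x => f x + g x) p.
Proof.
  intros Hf Hg eps He.
  destruct (Hf (eps / 2)) as [N1 H1]; [lra|]. destruct (Hg (eps / 2)) as [N2 H2]; [lra|].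
  exists (max N1 N2). intros y Hy Ha.
  specialize (H1 y Hy (agree_mono _ _ _ _ Ha (Nat.le_max_l _ _))).
  specialize (H2 y Hy (agree_mono _ _ _ _ Ha (Nat.le_max_r _ _))).
  replace (f p + g p - (f y + g y)) with ((f p - f y) + (g p - g y)) by ring.
  eapply Rle_lt_trans; [apply Rabs_triang | lra].
Qed.

Lemma contAt_mult f g p : contAt f p -> contAt g p -> contAt (fun x => f x * g x) p.
Proof.
  intros Hf Hg eps He.
  set (a := Rabs (f p) + 1). set (b := Rabs (g p) + 1).
  assert (Ha : 0 < a) by (unfold a; pose proof (Rabs_pos (f p)); lra).
  assert (Hb : 0 < b) by (unfold b; pose proof (Rabs_pos (g p)); lra).
  set (d := Rmin 1 (eps / (2 * (a + b)))).
  assert (Hd : 0 < d) by (apply Rmin_glb_lt; [lra | apply Rdiv_lt_0_compat; lra]).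
  assert (Hd1 : d <= 1) by apply Rmin_l.
  assert (Hd2 : d <= eps / (2 * (a + b))) by apply Rmin_r.
  destruct (Hf d Hd) as [N1 H1]. destruct (Hg d Hd) as [N2 H2].
  exists (max N1 N2). intros y Hy Hag.
  specialize (H1 y Hy (agree_mono _ _ _ _ Hag (Nat.le_max_l _ _))).
  specialize (H2 y Hy (agree_mono _ _ _ _ Hag (Nat.le_max_r _ _))).
  assert (Hgy : Rabs (g y) <= b).
  { unfold b. replace (g y) with (g p - (g p - g y)) by ring.
    eapply Rle_trans; [apply Rabs_triang|]. rewrite Rabs_Ropp. lra. }
  replace (f p * g p - f y * g y) with (f p * (g p - g y) + (f p - f y) * g y) by ring.
  eapply Rle_lt_trans; [apply Rabs_triang|]. rewrite !Rabs_mult.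
  assert (Rabs (f p) * Rabs (g p - g y) <= a * d)
    by (apply Rmult_le_compat; try apply Rabs_pos; unfold a; lra).
  assert (Rabs (f p - f y) * Rabs (g y) <= d * b)
    by (apply Rmult_le_compat; try apply Rabs_pos; lra).
  assert ((a + b) * d <= (a + b) * (eps / (2 * (a + b)))) by (apply Rmult_le_compat_l; lra).
  assert ((a + b) * (eps / (2 * (a + b))) = eps / 2) by (field; lra).
  lra.
Qed.

Lemma contAt_exp f p : contAt f p -> contAt (fun x => exp (f x)) p.
Proof.
  intros Hf eps He.
  destruct (derivable_continuous_pt _ _ (derivable_pt_exp (f p)) eps He) as [alp [Halp H]].
  destruct (Hf alp Halp) as [N HN]. exists N. intros y Hy Ha.
  destruct (Req_dec (f y) (f p)) as [E|E]; [rewrite E, Rminus_diag, Rabs_R0; auto|].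
  specialize (H (f y)). simpl in H. unfold Rdist in H. rewrite Rabs_minus_sym. apply H.
  split; [split; [exact I | auto] | rewrite Rabs_minus_sym; apply HN; auto].
Qed.

Lemma contAt_lsum {T} (F : T -> seqn -> R) L p : (forall t, In t L -> contAt (F t) p) ->
  contAt (fun x => lsum (fun t => F t x) L) p.
Proof.
  induction L; intros H; simpl; [apply contAt_const|].
  apply contAt_plus; [apply H; simpl; auto | apply IHL; intros; apply H; simpl; auto].
Qed.

Lemma contAt_shift f i p : InSigmaA l A p -> contAt f (Nat.iter i shift p) ->
  contAt (fun z => f (Nat.iter i shift z)) p.
Proof.
  intros Hp Hf eps He. destruct (Hf eps He) as [N HN]. exists (i + N)%nat. intros y Hy Ha.
  apply HN; [apply iter_shift_Sigma; auto|].
  intros t Ht. rewrite !iter_shift. apply Ha. lia.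
Qed.

Lemma holder_cont phi : holder l A phi -> forall p, InSigmaA l A p -> contAt phi p.
Proof.
  intros [C [th [[H0 H1] H]]] p Hp eps He.
  set (C' := Rabs C + 1).
  assert (HC1 : 0 < C') by (unfold C'; pose proof (Rabs_pos C); lra).
  assert (HC2 : C <= C') by (unfold C'; pose proof (Rle_abs C); lra).
  destruct (pow_lt_1_zero th ltac:(rewrite Rabs_pos_eq; lra) (eps / C')
              ltac:(apply Rdiv_lt_0_compat; lra)) as [N HN].
  exists N. intros y Hy Ha. eapply Rle_lt_trans; [apply (H p y N); auto|].
  specialize (HN N (le_n _)). rewrite Rabs_pos_eq in HN by (apply pow_le; lra).
  assert (C * th ^ N <= C' * th ^ N) by (apply Rmult_le_compat_r; [apply pow_le; lra | lra]).
  assert (C' * th ^ N < C' * (eps / C')) by (apply Rmult_lt_compat_l; lra).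
  replace (C' * (eps / C')) with eps in * by (field; lra). lra.
Qed.

Lemma contAt_weight phi n f p : holder l A phi -> InSigmaA l A p -> contAt f p ->
  contAt (fun z => exp (birkhoff phi n z) * f z) p.
Proof.
  intros Hh Hp Hf. apply contAt_mult; auto. apply contAt_exp. unfold birkhoff.
  apply contAt_lsum with (F := fun i z => phi (Nat.iter i shift z)). intros i _.
  apply contAt_shift; auto. apply holder_cont; auto. apply iter_shift_Sigma; auto.
Qed.

Lemma contAt_branch n w (b : bool) G p : In w (words l n) -> InSigmaA l A p ->
  (forall q, InSigmaA l A q -> contAt G q) ->
  contAt (fun x => if adm A w x && b then G (prep w x) else 0) p.
Proof.
  intros Hw Hp HG eps He. destruct (adm A w p && b) eqn:E.
  - assert (Hpp : InSigmaA l A (prep w p))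
      by (apply andb_true_iff in E; eapply prep_Sigma; eauto; tauto).
    destruct (HG _ Hpp eps He) as [N HN]. exists (S N). intros y Hy Ha.
    assert (Ey : adm A w p = adm A w y) by (apply adm_agree, (agree_mono _ _ _ _ Ha); lia).
    rewrite <- Ey, E. apply HN.
    + apply andb_true_iff in E. eapply prep_Sigma; eauto. rewrite <- Ey. tauto.
    + eapply agree_mono; [apply agree_prep; eauto | lia].
  - exists 1%nat. intros y Hy Ha. rewrite <- (adm_agree A w p y), E by auto.
    rewrite Rminus_diag, Rabs_R0; auto.
Qed.

Lemma Lgen_cont phi n C f : holder l A phi -> cont_on l A f -> cont_on l A (Lgen l A phi n C f).
Proof.
  intros Hh Hf. apply cont_on_iff. intros p Hp. unfold Lgen.
  apply contAt_lsum with (F := fun w x => if adm A w x && C w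
    then exp (birkhoff phi n (prep w x)) * f (prep w x) else 0).
  intros w Hw. apply contAt_branch with (n := n) (G := fun z => exp (birkhoff phi n z) * f z); auto.
  intros q Hq. apply contAt_weight; auto. apply cont_on_iff; auto.
Qed.

Lemma cont_const c : cont_on l A (fun _ => c).
Proof. apply cont_on_iff. intros p _. apply contAt_const. Qed.

Lemma cont_one : cont_on l A one.
Proof. apply cont_const. Qed.

Lemma cont_scal c f : cont_on l A f -> cont_on l A (fun x => c * f x).
Proof. rewrite !cont_on_iff. intros Hf p Hp. apply contAt_mult; auto. apply contAt_const. Qed.

Lemma cont_lin f g c : cont_on l A f -> cont_on l A g -> cont_on l A (fun x => f x + c * g x).
Proof.
  intros Hf Hg. pose proof (cont_scal c g Hg) as Hs. rewrite cont_on_iff in *.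
  intros p Hp. apply contAt_plus; auto.
Qed.

Lemma unif_lim_cont (fn : nat -> seqn -> R) f : (forall n, cont_on l A (fn n)) ->
  (forall eps, 0 < eps -> exists n, forall x, InSigmaA l A x -> Rabs (fn n x - f x) < eps) ->
  cont_on l A f.
Proof.
  intros Hc Hu p eps Hp He. destruct (Hu (eps / 3)) as [n Hn]; [lra|].
  destruct (Hc n p (eps / 3) Hp ltac:(lra)) as [N HN]. exists N. intros y Hy Ha.
  specialize (HN y Hy Ha). pose proof (Hn p Hp). pose proof (Hn y Hy).
  replace (f p - f y) with (- (fn n p - f p) + (fn n p - fn n y) + (fn n y - f y)) by ring.
  eapply Rle_lt_trans; [apply Rabs_triang|].
  eapply Rle_lt_trans; [apply Rplus_le_compat_r; apply Rabs_triang|].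
  rewrite Rabs_Ropp. lra.
Qed.

End Continuity.

(** * Compactness of Sigma_A^+ and uniform continuity *)

Section Compactness.
Variables (l : nat) (A : nat -> nat -> bool) (PP : nat -> seqn).
Hypothesis HP : forall M, InSigmaA l A (PP M).

Definition prefix_of (s : list nat) (M : nat) : Prop :=
  forall t, (t < length s)%nat -> PP M t = nth t s 0%nat.
Definition often_prefix (s : list nat) : Prop :=
  forall K, exists M, (K <= M)%nat /\ prefix_of s M.

(* Pigeonhole: a frequent prefix has a frequent one-letter extension. *)
Lemma often_prefix_step s : often_prefix s -> exists a, (a < l)%nat /\ often_prefix (s ++ [a]).
Proof.
  intros H. apply NNPP. intros Hn.
  assert (Hall : forall a, (a < l)%nat ->
            exists K, forall M, (K <= M)%nat -> ~ prefix_of (s ++ [a]) M).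
  { intros a Ha. apply NNPP. intros Hc. apply Hn. exists a. split; auto. intros K.
    apply NNPP. intros Hc2. apply Hc. exists K. intros M HM HE. apply Hc2. exists M; auto. }
  destruct (fin_bound l (fun a K => forall M, (K <= M)%nat -> ~ prefix_of (s ++ [a]) M))
    as [K HK]; [intros a B B' HB HP' M HM; apply HP'; lia | auto |].
  destruct (H K) as [M [HM HE]].
  apply (HK (PP M (length s)) (proj1 (HP M _)) M HM). intros t Ht.
  rewrite length_app in Ht. simpl in Ht. destruct (Nat.lt_ge_cases t (length s)).
  - rewrite app_nth1 by auto. apply HE; auto.
  - replace t with (length s) by lia. rewrite app_nth2, Nat.sub_diag by lia. reflexivity.
Qed.

(* König's construction of a cluster point: extend the prefix one letter at a time. *)
Definition next_letter (s : list nat) : nat :=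
  epsilon (inhabits 0%nat) (fun a => (a < l)%nat /\ often_prefix (s ++ [a])).

Fixpoint branch (n : nat) : list nat :=
  match n with O => [] | S n' => branch n' ++ [next_letter (branch n')] end.

Lemma next_letter_spec s : often_prefix s ->
  (next_letter s < l)%nat /\ often_prefix (s ++ [next_letter s]).
Proof.
  intros H. destruct (often_prefix_step s H) as [a Ha].
  apply (epsilon_spec (inhabits 0%nat) (fun a => (a < l)%nat /\ often_prefix (s ++ [a]))).
  eauto.
Qed.

Lemma branch_often n : often_prefix (branch n).
Proof.
  induction n; [|apply next_letter_spec; auto].
  intros K. exists K. split; auto. intros t Ht. simpl in Ht. lia.
Qed.

Lemma branch_length n : length (branch n) = n.
Proof. induction n; simpl; auto. rewrite length_app; simpl; lia. Qed.

Lemma branch_nth t n : (t < n)%nat -> nth t (branch n) 0%nat = next_letter (branch t).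
Proof.
  induction n; intros H; [lia|]. simpl. destruct (Nat.eq_dec t n) as [->|].
  - rewrite app_nth2 by (rewrite branch_length; lia).
    rewrite branch_length, Nat.sub_diag. reflexivity.
  - rewrite app_nth1 by (rewrite branch_length; lia). apply IHn. lia.
Qed.

Definition cluster : seqn := fun t => next_letter (branch t).

Lemma cluster_prefix n M : prefix_of (branch n) M -> agree cluster (PP M) n.
Proof.
  intros H t Ht. rewrite (H t) by (rewrite branch_length; auto). rewrite branch_nth; auto.
Qed.

Lemma cluster_point : InSigmaA l A cluster /\
  forall N K, exists M, (K <= M)%nat /\ agree cluster (PP M) N.
Proof.
  split.
  - intros t. split; [apply (next_letter_spec _ (branch_often t))|].
    destruct (branch_often (S (S t)) 0%nat) as [M [_ HM]]. apply cluster_prefix in HM.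
    rewrite (HM t), (HM (S t)) by lia. apply HP.
  - intros N K. destruct (branch_often N K) as [M [HM HE]].
    exists M. split; auto. apply cluster_prefix; auto.
Qed.

End Compactness.

Lemma unif_cont l A f : cont_on l A f -> forall eps, 0 < eps -> exists N, forall p q,
  InSigmaA l A p -> InSigmaA l A q -> agree p q N -> Rabs (f p - f q) < eps.
Proof.
  intros Hf eps He. apply NNPP. intros Hn.
  set (Bad := fun N (pq : seqn * seqn) => InSigmaA l A (fst pq) /\ InSigmaA l A (snd pq) /\
     agree (fst pq) (snd pq) N /\ eps <= Rabs (f (fst pq) - f (snd pq))).
  assert (H : forall N, exists pq, Bad N pq).
  { intros N. apply NNPP. intros Hc. apply Hn. exists N. intros p q Hp Hq Ha.
    apply Rnot_le_lt. intros Hle. apply Hc. exists (p, q). unfold Bad. simpl. auto. }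
  set (z := (fun _ => 0%nat) : seqn).
  set (pq := fun N => epsilon (inhabits (z, z)) (Bad N)).
  assert (Hpq : forall N, Bad N (pq N)) by (intros N; apply epsilon_spec, H).
  destruct (cluster_point l A (fun N => fst (pq N)) (fun N => proj1 (Hpq N))) as [Hc Hcl].
  set (c := cluster l (fun N => fst (pq N))) in *.
  destruct (Hf c (eps / 2) Hc ltac:(lra)) as [N HN].
  destruct (Hcl N N) as [M [HM HE]]. destruct (Hpq M) as [H1 [H2 [H3 H4]]].
  assert (HE' : agree c (snd (pq M)) N) by (intros t Ht; rewrite HE by auto; apply H3; lia).
  pose proof (HN _ H1 HE) as Hp. pose proof (HN _ H2 HE') as Hq.
  replace (f (fst (pq M)) - f (snd (pq M)))
    with (- (f c - f (fst (pq M))) + (f c - f (snd (pq M)))) in H4 by ring.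
  pose proof (Rabs_triang (- (f c - f (fst (pq M)))) (f c - f (snd (pq M)))) as Ht.
  rewrite Rabs_Ropp in Ht. lra.
Qed.

(** * Positive normalised functionals *)

Lemma Rabs_le_between a b : Rabs a <= b -> - b <= a <= b.
Proof. unfold Rabs. destruct (Rcase_abs a); intros; lra. Qed.

Lemma eq_of_close C a b : (forall e, 0 < e -> Rabs (a - b) <= C * e) -> a = b.
Proof.
  intros H. apply Rminus_diag_uniq. destruct (Req_dec (a - b) 0) as [E|E]; auto.
  pose proof (Rabs_pos_lt _ E). pose proof (Rabs_pos C). pose proof (Rle_abs C).
  set (e := Rabs (a - b) / (2 * (Rabs C + 1))).
  assert (He : 0 < e) by (apply Rdiv_lt_0_compat; lra).
  specialize (H e He). assert (C * e <= Rabs C * e) by (apply Rmult_le_compat_r; lra).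
  assert (Rabs C * e <= (Rabs C + 1) * e) by nra.
  assert ((Rabs C + 1) * e = Rabs (a - b) / 2) by (unfold e; field; lra).
  lra.
Qed.

Section Functional.
Variables (l : nat) (A : nat -> nat -> bool) (nu : (seqn -> R) -> R).
Hypothesis Hnu : prob_functional l A nu.

Lemma nu_scal c f : cont_on l A f -> nu (fun x => c * f x) = c * nu f.
Proof. intros Hf. destruct Hnu as [_ [H2 _]]. apply H2; auto. Qed.

Lemma nu_const c : nu (fun _ => c) = c.
Proof.
  destruct Hnu as [_ [_ [_ H4]]]. transitivity (nu (fun x => c * one x)).
  - f_equal. apply functional_extensionality; intros; unfold one; ring.
  - rewrite nu_scal, H4 by apply cont_one. ring.
Qed.

Lemma nu_le f g : cont_on l A f -> cont_on l A g ->
  (forall x, InSigmaA l A x -> f x <= g x) -> nu f <= nu g.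
Proof.
  intros Hf Hg H. destruct Hnu as [H1 [_ [H3 _]]].
  assert (Hpos : 0 <= nu (fun x => g x + (-1) * f x)).
  { apply H3; [apply cont_lin; auto|]. intros x Hx. specialize (H x Hx). lra. }
  rewrite H1, nu_scal in Hpos by (auto; apply cont_scal; auto). lra.
Qed.

Lemma nu_ext f g : cont_on l A f -> cont_on l A g ->
  (forall x, InSigmaA l A x -> f x = g x) -> nu f = nu g.
Proof.
  intros Hf Hg H. apply Rle_antisym; apply nu_le; auto; intros x Hx; rewrite H; auto; lra.
Qed.

Lemma nu_close f g e : cont_on l A f -> cont_on l A g ->
  (forall x, InSigmaA l A x -> Rabs (f x - g x) <= e) -> Rabs (nu f - nu g) <= e.
Proof.
  intros Hf Hg H. destruct Hnu as [H1 _].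
  assert (Hfg : cont_on l A (fun x => f x + (-1) * g x)) by (apply cont_lin; auto).
  assert (E : nu f - nu g = nu (fun x => f x + (-1) * g x))
    by (rewrite H1, nu_scal by (auto; apply cont_scal; auto); ring).
  apply Rabs_le. rewrite E. split.
  - rewrite <- (nu_const (- e)). apply nu_le; auto using cont_const.
    intros x Hx. pose proof (Rabs_le_between _ _ (H x Hx)). lra.
  - rewrite <- (nu_const e). apply nu_le; auto using cont_const.
    intros x Hx. pose proof (Rabs_le_between _ _ (H x Hx)). lra.
Qed.

End Functional.

(** * Paths inside Delta *)

Section Paths.
Variables (l : nat) (A : nat -> nat -> bool) (Delta : nat -> bool) (m : nat) (cls : nat -> nat).
Hypothesis HDsub : forall i, Delta i = true -> (i < l)%nat.
Hypothesis HDirr : irreducible l A Delta.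

Lemma infinite_path_from a : Delta a = true ->
  exists y, InSigmaD l A Delta y /\ A a (y 0%nat) = true.
Proof.
  intros Ha.
  assert (Hsucc : forall a, Delta a = true ->
            exists b, Delta b = true /\ A a b = true /\ (b < l)%nat).
  { intros c Hc. destruct (HDirr c c Hc Hc) as [n [Hn [w [H0 [_ [H2 H3]]]]]].
    exists (w 1%nat). destruct (H2 1%nat Hn). rewrite <- H0. repeat split; auto. }
  set (good := fun a b => Delta b = true /\ A a b = true /\ (b < l)%nat).
  set (sf := fun a => epsilon (inhabits 0%nat) (good a)).
  assert (Hsf : forall a, Delta a = true -> good a (sf a))
    by (intros c Hc; apply epsilon_spec, Hsucc, Hc).
  assert (HD : forall t, Delta (Nat.iter (S t) sf a) = true)
    by (induction t; apply Hsf; auto).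
  exists (fun t => Nat.iter (S t) sf a). split; [split|].
  - intros t. split; [apply HDsub, HD | apply (Hsf _ (HD t))].
  - intros t. apply HD.
  - apply (Hsf _ Ha).
Qed.

Lemma path_bound : exists B0, forall a b, Delta a = true -> Delta b = true ->
  exists L, (1 <= L <= B0)%nat /\ path_in l A Delta a b L.
Proof.
  set (Pab := fun a b B => Delta a = true -> Delta b = true ->
                 exists L, (1 <= L <= B)%nat /\ path_in l A Delta a b L).
  assert (Hmono : forall a b B B', (B <= B')%nat -> Pab a b B -> Pab a b B').
  { intros a b B B' HB H Ha Hb. destruct (H Ha Hb) as [L [HL HP]]. exists L. split; auto. lia. }
  destruct (fin_bound l (fun a B => forall b, (b < l)%nat -> Pab a b B)) as [B HB].
  - intros a B B' HBB H b Hb. apply Hmono with B; auto.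
  - intros a Ha. apply (fin_bound l (Pab a)); [intros; eapply Hmono; eauto|].
    intros b Hb. destruct (Delta a) eqn:Ea; [|exists 0%nat; unfold Pab; congruence].
    destruct (Delta b) eqn:Eb; [|exists 0%nat; unfold Pab; congruence].
    destruct (HDirr a b Ea Eb) as [L [HL HP]]. exists L. intros _ _. exists L. split; [lia | auto].
  - exists B. intros a b Ha Hb. apply HB; auto.
Qed.

Hypothesis Hm : (1 <= m)%nat.
Hypothesis Hcls_rng : forall i, Delta i = true -> (cls i < m)%nat.
Hypothesis Hcls_cyc : forall i i', Delta i = true -> Delta i' = true -> A i i' = true ->
  cls i' = ((cls i + 1) mod m)%nat.

Lemma class_point y : InSigmaD l A Delta y ->
  forall t, cls (y t) = ((cls (y 0%nat) + t) mod m)%nat.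
Proof.
  intros [Hy HD] t. induction t.
  - rewrite Nat.add_0_r, Nat.mod_small; auto.
  - rewrite (Hcls_cyc (y t)), IHt, Nat.Div0.add_mod_idemp_l; auto; [f_equal; lia | apply Hy].
Qed.

Lemma prep_SigmaD n w x : In w (words l n) -> adm A w x = true ->
  (forall s, (s < n)%nat -> Delta (nth s w 0%nat) = true) -> InSigmaD l A Delta x ->
  InSigmaD l A Delta (prep w x).
Proof.
  intros Hw Ha HD [Hx HxD]. split; [eapply prep_Sigma; eauto|].
  apply words_length in Hw. intros t. destruct (Nat.lt_ge_cases t (length w)).
  - rewrite prep_nth by auto. apply HD. lia.
  - replace t with (length w + (t - length w))%nat by lia. rewrite prep_tail. auto.
Qed.

Lemma Omega_prep i n w x : (1 <= n)%nat -> In w (words l n) -> adm A w x = true ->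
  letters_ok (in_class Delta cls m i) n w = true -> (i < m)%nat -> InSigmaD l A Delta x ->
  InOmega l A Delta cls i (prep w x).
Proof.
  intros Hn Hw Ha HC Hi Hx. rewrite letters_ok_iff in HC. unfold in_class in HC.
  split.
  - apply prep_SigmaD with n; auto. intros s Hs.
    specialize (HC s Hs). apply andb_true_iff in HC. tauto.
  - pose proof (words_length _ _ _ Hw). rewrite prep_nth by lia.
    specialize (HC 0%nat ltac:(lia)). apply andb_true_iff in HC as [_ HC].
    apply Nat.eqb_eq in HC. rewrite HC, Nat.add_0_r, Nat.mod_small; auto.
Qed.

Lemma adm_change w x x' : adm A w x = true -> (1 <= length w)%nat ->
  A (nth (length w - 1) w 0%nat) (x' 0%nat) = true -> adm A w x' = true.
Proof.
  intros Ha Hl Hlast. unfold adm in *. rewrite forallb_forall in *. intros s Hs.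
  apply in_seq in Hs. destruct (Nat.lt_ge_cases (S s) (length w)).
  - rewrite !prep_nth by lia. specialize (Ha s ltac:(apply in_seq; lia)).
    rewrite !prep_nth in Ha by lia. auto.
  - rewrite prep_nth by lia. replace (S s) with (length w + 0)%nat by lia. rewrite prep_tail.
    replace s with (length w - 1)%nat by lia. auto.
Qed.

Lemma close_Omega i n w x : (1 <= n)%nat -> In w (words l n) -> adm A w x = true ->
  letters_ok (in_class Delta cls m i) n w = true -> (i < m)%nat ->
  exists z, InOmega l A Delta cls i z /\ agree (prep w x) z n.
Proof.
  intros Hn Hw Ha HC Hi. pose proof (words_length _ _ _ Hw) as Hlen.
  set (a := nth (n - 1) w 0%nat).
  assert (HaD : Delta a = true).
  { apply letters_ok_iff with (s := (n - 1)%nat) in HC; [|lia].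
    unfold in_class in HC. apply andb_true_iff in HC. tauto. }
  destruct (infinite_path_from a HaD) as [y [Hy Hay]].
  exists (prep w y). split.
  - apply Omega_prep with n; auto. apply adm_change with x; auto; [lia | rewrite Hlen; auto].
  - intros t Ht. rewrite !prep_nth by lia. reflexivity.
Qed.

Lemma prep_path_SigmaD (p : seqn) K y :
  (forall t, (t <= K)%nat -> (p t < l)%nat /\ Delta (p t) = true) ->
  (forall t, (t < K)%nat -> A (p t) (p (S t)) = true) ->
  InSigmaD l A Delta y -> y 0%nat = p K -> InSigmaD l A Delta (prep (map p (seq 0 K)) y).
Proof.
  intros Hp HA Hy Hy0.
  assert (Ep : forall t, (t <= K)%nat -> prep (map p (seq 0 K)) y t = p t).
  { intros t Ht. destruct (Nat.lt_ge_cases t K).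
    - rewrite prep_nth by (rewrite length_map, length_seq; auto).
      rewrite (nth_indep _ _ (p 0%nat)) by (rewrite length_map, length_seq; auto).
      rewrite map_nth, seq_nth by auto. reflexivity.
    - replace t with (length (map p (seq 0 K)) + 0)%nat by (rewrite length_map, length_seq; lia).
      rewrite prep_tail, Hy0, length_map, length_seq. f_equal. lia. }
  assert (Ey : forall t, prep (map p (seq 0 K)) y (K + t)%nat = y t).
  { intros t. pose proof (prep_tail (map p (seq 0 K)) y t) as E.
    rewrite length_map, length_seq in E. exact E. }
  destruct Hy as [Hy HyD]. split; [intros t; split|intros t].
  - destruct (Nat.le_gt_cases t K); [rewrite Ep; auto; apply Hp; auto|].
    replace t with (K + (t - K))%nat by lia. rewrite Ey. apply Hy.
  - destruct (Nat.lt_ge_cases t K); [rewrite !Ep by lia; auto|].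
    replace t with (K + (t - K))%nat by lia.
    replace (S (K + (t - K))) with (K + S (t - K))%nat by lia.
    rewrite !Ey. apply Hy.
  - destruct (Nat.le_gt_cases t K); [rewrite Ep; auto; apply Hp; auto|].
    replace t with (K + (t - K))%nat by lia. rewrite Ey. apply HyD.
Qed.

Lemma branch_in_class i v x0 : (i < m)%nat -> InOmega l A Delta cls i x0 ->
  InSigmaD l A Delta (prep v x0) -> cls (prep v x0 0%nat) = i ->
  (length v mod m = 0)%nat /\ In v (words l (length v)) /\ adm A v x0 = true /\
  letters_ok (in_class Delta cls m i) (length v) v = true.
Proof.
  intros Hi [Hx0 Hx0c] Hy Hy0.
  assert (Hc : forall t, cls (prep v x0 t) = ((i + t) mod m)%nat)
    by (intros t; rewrite (class_point _ Hy t), Hy0; reflexivity).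
  assert (Hnth : forall s, (s < length v)%nat -> nth s v 0%nat = prep v x0 s)
    by (intros; rewrite prep_nth; auto).
  repeat split.
  - pose proof (Hc (length v)) as H. rewrite <- (Nat.add_0_r (length v)), prep_tail in H.
    rewrite Nat.add_0_r, Hx0c in H.
    apply (mod_cancel m Hm (length v mod m) 0 i); [apply Nat.mod_upper_bound; lia | lia|].
    rewrite Nat.Div0.add_mod_idemp_l, Nat.add_comm, <- H. simpl. rewrite Nat.mod_small; auto.
  - apply In_words. split; auto. intros a Ha. apply In_nth with (d := 0%nat) in Ha.
    destruct Ha as [s [Hs <-]]. rewrite Hnth by auto. apply Hy.
  - unfold adm. apply forallb_forall. intros t _. apply Hy.
  - apply letters_ok_iff. intros s Hs. unfold in_class. rewrite Hnth, Hc by auto.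
    rewrite (proj2 Hy), Nat.eqb_refl. reflexivity.
Qed.

Lemma connecting_branch i z x0 N L : (i < m)%nat ->
  InOmega l A Delta cls i z -> InOmega l A Delta cls i x0 -> (1 <= N)%nat ->
  path_in l A Delta (z (N - 1)%nat) (x0 0%nat) L ->
  exists v, length v = (N - 1 + L)%nat /\ (length v mod m = 0)%nat /\
    In v (words l (length v)) /\ adm A v x0 = true /\
    letters_ok (in_class Delta cls m i) (length v) v = true /\ agree z (prep v x0) N.
Proof.
  intros Hi [Hz Hzc] Hx0 HN [w [Hw0 [HwL [Hw1 Hw2]]]].
  set (u := prep (map w (seq 0 L)) x0).
  assert (Hu : InSigmaD l A Delta u) by (apply prep_path_SigmaD; auto; apply Hx0).
  assert (Hu0 : u 0%nat = z (N - 1)%nat).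
  { unfold u. destruct L as [|L].
    - simpl seq. simpl map. rewrite prep_nil, <- HwL. auto.
    - rewrite prep_nth by (rewrite length_map, length_seq; lia). simpl. auto. }
  set (zs := map z (seq 0 (N - 1))).
  assert (Hzs : forall t, (t < N - 1)%nat -> prep zs u t = z t).
  { intros t Ht. unfold zs. rewrite prep_nth by (rewrite length_map, length_seq; auto).
    rewrite (nth_indep _ _ (z 0%nat)) by (rewrite length_map, length_seq; auto).
    rewrite map_nth, seq_nth by auto. reflexivity. }
  assert (Hzs_len : length zs = (N - 1)%nat) by (unfold zs; rewrite length_map, length_seq; auto).
  assert (Hag : agree z (prep zs u) N).
  { intros t Ht. destruct (Nat.lt_ge_cases t (N - 1)); [rewrite Hzs; auto|].
    replace t with (length zs + 0)%nat by lia. rewrite prep_tail, Hu0. f_equal. lia. }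
  assert (Hy : InSigmaD l A Delta (prep zs u)).
  { apply prep_path_SigmaD; auto.
    - intros t _. split; [apply Hz | apply Hz].
    - intros t _. apply Hz. }
  assert (Hv : prep (zs ++ map w (seq 0 L)) x0 = prep zs u) by apply prep_app.
  assert (Hlen : length (zs ++ map w (seq 0 L)) = (N - 1 + L)%nat)
    by (rewrite length_app, Hzs_len, length_map, length_seq; reflexivity).
  destruct (branch_in_class i (zs ++ map w (seq 0 L)) x0) as [H1 [H2 [H3 H4]]];
    rewrite ?Hv; auto.
  - rewrite <- (Hag 0%nat) by lia. auto.
  - exists (zs ++ map w (seq 0 L)). rewrite Hv. repeat split; auto.
Qed.

Lemma approximating_branch : exists B0, forall i z x0 N, (i < m)%nat ->
  InOmega l A Delta cls i z -> InOmega l A Delta cls i x0 -> (1 <= N)%nat ->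
  exists v n, (1 <= n)%nat /\ (n * m <= N + B0)%nat /\ In v (words l (n * m)) /\
    adm A v x0 = true /\ letters_ok (in_class Delta cls m i) (n * m) v = true /\
    agree z (prep v x0) N.
Proof.
  destruct path_bound as [B0 HB0]. exists B0. intros i z x0 N Hi Hz Hx0 HN.
  destruct (HB0 (z (N - 1)%nat) (x0 0%nat)) as [L [HL Hpath]];
    [apply (proj1 Hz) | apply (proj1 Hx0) |].
  destruct (connecting_branch i z x0 N L Hi Hz Hx0 HN Hpath)
    as [v [Hlen [Hmod [Hv [Hva [HvC Hag]]]]]].
  exists v, (length v / m)%nat.
  assert (Hnm : length v = (length v / m * m)%nat)
    by (pose proof (Nat.Div0.div_mod (length v) m); lia).
  rewrite <- Hnm. repeat split; auto; nia.
Qed.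

End Paths.

(** * Uniqueness of the nonnegative eigenfunction of L^(m)_i *)

Lemma exp_le a b : a <= b -> exp a <= exp b.
Proof. intros [H|H]; [left; apply exp_increasing; auto | rewrite H; lra]. Qed.

Lemma exp_pow a n : exp a ^ n = exp (INR n * a).
Proof.
  induction n; simpl; [rewrite Rmult_0_l, exp_0; auto|].
  rewrite IHn, <- exp_plus. f_equal. destruct n; simpl; ring.
Qed.

Lemma birkhoff_lower l A phi z0 : holder l A phi -> InSigmaA l A z0 ->
  exists c, forall n y, InSigmaA l A y -> INR n * c <= birkhoff phi n y.
Proof.
  intros [C [th [_ H]]] Hz0. exists (phi z0 - C). intros n y Hy.
  unfold birkhoff. rewrite <- lsum_const_seq with (s := 0%nat).
  apply lsum_le_in. intros t _.
  specialize (H z0 _ 0%nat Hz0 (iter_shift_Sigma l A t y Hy) ltac:(intros s Hs; lia)).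
  simpl in H. rewrite Rmult_1_r in H. apply Rabs_le_between in H. lra.
Qed.

Lemma max_multiple_below (S : seqn -> Prop) (u h : seqn -> R) z0 H :
  (forall x, S x -> 0 <= u x) -> (forall x, S x -> 0 <= h x <= H) -> S z0 -> 0 < h z0 ->
  exists t, (forall x, S x -> t * h x <= u x) /\
            (forall eps, 0 < eps -> exists x0, S x0 /\ u x0 - t * h x0 < eps).
Proof.
  intros Hu Hh Hz Hhz.
  set (E := fun t => 0 <= t /\ forall x, S x -> t * h x <= u x).
  assert (Hb : bound E).
  { exists (u z0 / h z0). intros t [_ Ht]. specialize (Ht z0 Hz).
    apply Rmult_le_reg_r with (h z0); auto. unfold Rdiv. rewrite Rmult_assoc, Rinv_l by lra. lra. }
  assert (HE0 : E 0) by (split; [lra | intros x Hx; rewrite Rmult_0_l; auto]).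
  destruct (completeness E Hb (ex_intro _ 0 HE0)) as [t [Hub Hlub]].
  assert (Ht0 : 0 <= t) by (apply Hub; auto).
  exists t. split.
  - intros x Hx. destruct (Hh x Hx) as [[Hpos|Hz'] _]; [|rewrite <- Hz', Rmult_0_r; auto].
    assert (t <= u x / h x).
    { apply Hlub. intros t' [_ Ht']. specialize (Ht' x Hx).
      apply Rmult_le_reg_r with (h x); auto. unfold Rdiv. rewrite Rmult_assoc, Rinv_l by lra. lra. }
    apply Rmult_le_compat_r with (r := h x) in H0; [|lra]. unfold Rdiv in H0.
    rewrite Rmult_assoc, Rinv_l in H0 by lra. lra.
  - intros eps He. assert (HHpos : 0 < H) by (specialize (Hh z0 Hz); lra).
    set (d := eps / (H + 1)). assert (Hd : 0 < d) by (apply Rdiv_lt_0_compat; lra).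
    assert (Hn : ~ E (t + d)) by (intros HE; specialize (Hub _ HE); lra).
    apply not_and_or in Hn as [Hn|Hn]; [lra|].
    apply not_all_ex_not in Hn as [x Hx]. apply imply_to_and in Hx as [Hx Hx'].
    apply Rnot_le_lt in Hx'. exists x. split; auto. specialize (Hh x Hx).
    assert (d * h x <= d * H) by (apply Rmult_le_compat_l; lra).
    assert (d * H < eps).
    { unfold d. apply Rlt_le_trans with (eps / (H + 1) * (H + 1)).
      - apply Rmult_lt_compat_l; [auto | lra].
      - right. field. lra. }
    nra.
Qed.

Section Uniqueness.
Variables (l : nat) (A : nat -> nat -> bool) (phi : seqn -> R)
  (Delta : nat -> bool) (m : nat) (cls : nat -> nat) (P : R) (i : nat).
Hypothesis Hphi : holder l A phi.
Hypothesis Hm : (1 <= m)%nat.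
Hypothesis HDsub : forall a, Delta a = true -> (a < l)%nat.
Hypothesis HDirr : irreducible l A Delta.
Hypothesis Hcls_rng : forall a, Delta a = true -> (cls a < m)%nat.
Hypothesis Hcls_cyc : forall a a', Delta a = true -> Delta a' = true -> A a a' = true ->
  cls a' = ((cls a + 1) mod m)%nat.
Hypothesis Hi : (i < m)%nat.

Local Notation Li := (Lm l A phi Delta cls m i).
Local Notation lam := (exp (INR m * P)).
Local Notation Omega := (InOmega l A Delta cls i).

Definition is_eigen (g : seqn -> R) : Prop :=
  forall n x, InSigmaA l A x -> opiter Li n g x = lam ^ n * g x.

Lemma eigen_lin u h c : is_eigen u -> is_eigen h -> is_eigen (fun x => u x + c * h x).
Proof.
  intros Hu Hh n x Hx. rewrite opiter_Lm, Lgen_lin, <- !opiter_Lm, Hu, Hh by auto. ring.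
Qed.

Lemma lam_pow n : lam ^ n = exp (INR (n * m) * P).
Proof. rewrite exp_pow, mult_INR. f_equal. ring. Qed.

Lemma Omega_Sigma x : Omega x -> InSigmaA l A x.
Proof. intros [[H _] _]; auto. Qed.

Lemma harnack g x0 v n c : is_eigen g -> (forall x, Omega x -> 0 <= g x) -> Omega x0 ->
  (forall k y, InSigmaA l A y -> INR k * c <= birkhoff phi k y) ->
  (1 <= n)%nat -> In v (words l (n * m)) -> adm A v x0 = true ->
  letters_ok (in_class Delta cls m i) (n * m) v = true ->
  g (prep v x0) <= exp (INR (n * m) * Rabs (P - c)) * g x0.
Proof.
  intros Hg Hg0 Hx0 Hc Hn Hv Hva HvC.
  assert (HOmega : forall w, In w (words l (n * m)) -> adm A w x0 = true ->
            letters_ok (in_class Delta cls m i) (n * m) w = true -> Omega (prep w x0))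
    by (intros; apply (Omega_prep l A Delta m cls) with (n := (n * m)%nat); auto;
        [nia | apply Hx0]).
  assert (Hterm : exp (birkhoff phi (n * m) (prep v x0)) * g (prep v x0) <= lam ^ n * g x0).
  { rewrite <- Hg, opiter_Lm by (apply Omega_Sigma; auto).
    apply Lgen_ge_branch; [|auto | rewrite Hva, HvC; reflexivity].
    intros w Hw E. apply andb_true_iff in E as [E1 E2]. apply Hg0, HOmega; auto. }
  assert (Hy : InSigmaA l A (prep v x0)) by (apply Omega_Sigma, HOmega; auto).
  assert (Hgy : 0 <= g (prep v x0)) by (apply Hg0, HOmega; auto).
  (* e^{nm c} g(y) <= e^{S_{nm} phi (y)} g(y) <= lam^n g(x0) = e^{nm P} g(x0). *)
  rewrite lam_pow in Hterm.
  apply Rmult_le_reg_l with (exp (INR (n * m) * c)); [apply exp_pos|].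
  eapply Rle_trans; [|apply Rmult_le_compat_l, Rmult_le_compat_r, exp_le;
    [left; apply exp_pos | apply Hg0; auto | apply Rmult_le_compat_l, Rle_abs; apply pos_INR]].
  rewrite <- Rmult_assoc, <- exp_plus. replace (INR (n * m) * c + INR (n * m) * (P - c))
    with (INR (n * m) * P) by ring.
  eapply Rle_trans; [|apply Hterm].
  apply Rmult_le_compat_r; auto. apply exp_le, Hc; auto.
Qed.

(* An eigenfunction which is nonnegative on Omega_i with infimum 0 there vanishes on
   Omega_i: by irreducibility every z in Omega_i is approximated by preimages of points
   where g is small, and the Harnack inequality transports the smallness. *)
Lemma eigen_vanish_on_Omega g : cont_on l A g -> is_eigen g ->
  (forall x, Omega x -> 0 <= g x) ->
  (forall eps, 0 < eps -> exists x0, Omega x0 /\ g x0 < eps) ->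
  forall z, Omega z -> g z = 0.
Proof.
  intros Hgc Hg Hg0 Hinf z Hz. apply Rle_antisym; [|apply Hg0; auto].
  apply Rnot_lt_le. intros Hpos.
  destruct (birkhoff_lower l A phi z Hphi (Omega_Sigma z Hz)) as [c Hc].
  destruct (approximating_branch l A Delta m cls HDsub HDirr Hm Hcls_rng Hcls_cyc) as [B0 HB0].
  destruct (Hgc z (g z / 2) (Omega_Sigma z Hz) ltac:(lra)) as [N0 HN0].
  set (N := max 1 N0). set (K := exp (INR (N + B0) * Rabs (P - c))).
  assert (HK : 0 < K) by apply exp_pos.
  destruct (Hinf (g z / 2 / K) ltac:(apply Rdiv_lt_0_compat; lra)) as [x0 [Hx0 Hgx0]].
  destruct (HB0 i z x0 N Hi Hz Hx0 ltac:(unfold N; lia))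
    as [v [n [Hn [HnB [Hv [Hva [HvC Hag]]]]]]].
  assert (Hy : Omega (prep v x0))
    by (apply (Omega_prep l A Delta m cls) with (n := (n * m)%nat); auto; [nia | apply Hx0]).
  assert (Hgy : g (prep v x0) <= K * g x0).
  { eapply Rle_trans; [apply (harnack g x0 v n c); auto|].
    apply Rmult_le_compat_r; [apply Hg0; auto|]. apply exp_le, Rmult_le_compat_r;
      [apply Rabs_pos | apply le_INR; unfold N in *; lia]. }
  assert (K * g x0 < g z / 2)
    by (replace (g z / 2) with (K * (g z / 2 / K)) by (field; lra);
        apply Rmult_lt_compat_l; auto).
  assert (Hcl : Rabs (g z - g (prep v x0)) < g z / 2)
    by (apply HN0; [apply Omega_Sigma; auto | eapply agree_mono; [apply Hag | unfold N; lia]]).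
  apply Rabs_def2 in Hcl. lra.
Qed.

(* An eigenfunction vanishing on Omega_i vanishes everywhere, provided L_i^n 1 = O(lam^n)
   along a subsequence: all preimages under iterates of L^(m)_i are exponentially close to
   Omega_i, so uniform continuity of g makes L_i^n g small compared with L_i^n 1. *)
Lemma eigen_vanish_everywhere g : cont_on l A g -> is_eigen g ->
  (forall z, Omega z -> g z = 0) ->
  (forall x, InSigmaA l A x -> exists B, forall N0, exists n,
     (N0 <= n)%nat /\ opiter Li n one x <= B * lam ^ n) ->
  forall x, InSigmaA l A x -> g x = 0.
Proof.
  intros Hgc Hg Hg0 Hgr x Hx. destruct (Hgr x Hx) as [B HB].
  assert (Hsm : forall eps, 0 < eps -> Rabs (g x) <= eps * B).
  { intros eps He. destruct (unif_cont l A g Hgc eps He) as [N HN].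
    destruct (HB (max N 1)) as [n [Hn HLn]].
    assert (Hlp : 0 < lam ^ n) by (apply pow_lt, exp_pos).
    assert (Habs : Rabs (opiter Li n g x) <= eps * opiter Li n one x).
    { rewrite !opiter_Lm. apply Lgen_abs_bound. intros w Hw Hac.
      apply andb_true_iff in Hac as [Ha HC].
      destruct (close_Omega l A Delta m cls HDsub HDirr Hm i (n * m) w x
                  ltac:(nia) Hw Ha HC Hi) as [z [HzO Hag]].
      specialize (HN (prep w x) z (prep_Sigma l A w x _ Hw Ha Hx) (Omega_Sigma z HzO)
                    ltac:(eapply agree_mono; [apply Hag | nia])).
      rewrite (Hg0 z HzO), Rminus_0_r in HN. lra. }
    rewrite Hg, Rabs_mult, (Rabs_pos_eq (lam ^ n)) in Habs by (auto; lra).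
    apply Rmult_le_reg_l with (lam ^ n); auto.
    eapply Rle_trans; [apply Habs|].
    replace (lam ^ n * (eps * B)) with (eps * (B * lam ^ n)) by ring.
    apply Rmult_le_compat_l; lra. }
  apply (eq_of_close B). intros e He. rewrite Rminus_0_r, Rmult_comm. auto.
Qed.

Lemma eigen_unique u h : cont_on l A u -> cont_on l A h ->
  (forall x, InSigmaA l A x -> 0 <= u x) ->
  (exists H, forall x, InSigmaA l A x -> 0 <= h x <= H) ->
  (exists z0, Omega z0 /\ 0 < h z0) ->
  is_eigen u -> is_eigen h ->
  (forall x, InSigmaA l A x -> exists B, forall N0, exists n,
     (N0 <= n)%nat /\ opiter Li n one x <= B * lam ^ n) ->
  exists t, forall x, InSigmaA l A x -> u x = t * h x.
Proof.
  intros Huc Hhc Hu [H Hh] [z0 [Hz0 Hhz0]] Hue Hhe Hgr.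
  destruct (max_multiple_below Omega u h z0 H) as [t [Ht1 Ht2]];
    auto using Omega_Sigma.
  exists t. set (g := fun x => u x + (- t) * h x).
  assert (Hgc : cont_on l A g) by (apply cont_lin; auto).
  assert (Hge : is_eigen g) by (apply eigen_lin; auto).
  assert (Hg0 : forall x, Omega x -> 0 <= g x)
    by (intros x Hx; specialize (Ht1 x Hx); unfold g; lra).
  assert (HgO : forall z, Omega z -> g z = 0).
  { apply eigen_vanish_on_Omega; auto. intros eps He.
    destruct (Ht2 eps He) as [x0 [Hx0 Hlt]]. exists x0. unfold g. split; auto. lra. }
  intros x Hx. pose proof (eigen_vanish_everywhere g Hgc Hge HgO Hgr x Hx). unfold g in *. lra.
Qed.

End Uniqueness.

(** * The eigenfunctions h_j and the eigenmeasures nu_j *)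

(* The hypotheses of the theorem that are actually used (m >= 1 suffices); from them we
   derive the properties of h_j and nu_j required by the uniqueness theorem. *)
Section Eigendata.
Variables (l : nat) (A : nat -> nat -> bool) (phi : seqn -> R)
  (Delta : nat -> bool) (m : nat) (cls : nat -> nat) (P : R)
  (h : nat -> seqn -> R) (nu : nat -> (seqn -> R) -> R).
Hypothesis Hphi : holder l A phi.
Hypothesis Hnorm : forall x, InSigmaA l A x -> Lphi l A phi one x = 1.
Hypothesis Hm : (1 <= m)%nat.
Hypothesis HDsub : forall a, Delta a = true -> (a < l)%nat.
Hypothesis HDirr : irreducible l A Delta.
Hypothesis Hcls_rng : forall a, Delta a = true -> (cls a < m)%nat.
Hypothesis Hcls_cyc : forall a a', Delta a = true -> Delta a' = true -> A a a' = true ->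
  cls a' = ((cls a + 1) mod m)%nat.
Hypothesis Hh : forall j, (j < m)%nat -> forall eps, 0 < eps -> exists N, forall n x,
  (N <= n)%nat -> InSigmaA l A x ->
  Rabs (exp (- (INR n * INR m * P)) * opiter (Lm l A phi Delta cls m j) n one x - h j x) < eps.
Hypothesis Hnu_prob : forall j, (j < m)%nat -> prob_functional l A (nu j).
Hypothesis Hnu_supp : forall j, (j < m)%nat -> supported_on_Omega l A Delta cls j (nu j).
Hypothesis Hnu_eig : forall j, (j < m)%nat -> forall psi, cont_on l A psi ->
  nu j (Lm l A phi Delta cls m j psi) = exp (INR m * P) * nu j psi.

Local Notation L j := (Lm l A phi Delta cls m j).
Local Notation LD := (LDelta l A phi Delta).
Local Notation lam := (exp (INR m * P)).

Definition approx j n : seqn -> R :=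
  fun x => exp (- (INR n * INR m * P)) * opiter (L j) n one x.

(* lam^-n, written as in the definition of h_j, inverts lam^n. *)
Lemma lam_pow_inv n : exp (- (INR n * INR m * P)) * lam ^ n = 1.
Proof.
  rewrite exp_pow, <- exp_plus.
  replace (- (INR n * INR m * P) + INR n * (INR m * P)) with 0 by ring. apply exp_0.
Qed.

Lemma Lm_iter_cont j n f : cont_on l A f -> cont_on l A (opiter (L j) n f).
Proof. intros Hf. rewrite opiter_Lm. apply Lgen_cont; auto. Qed.

Lemma LD_iter_cont k f : cont_on l A f -> cont_on l A (opiter LD k f).
Proof. intros Hf. rewrite opiter_LDelta. apply Lgen_cont; auto. Qed.

Lemma approx_cont j n : cont_on l A (approx j n).
Proof. apply cont_scal, Lm_iter_cont, cont_one. Qed.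

Lemma Lm_iter_one_bound j n x : InSigmaA l A x -> 0 <= opiter (L j) n one x <= 1.
Proof.
  intros Hx. rewrite opiter_Lm. split.
  - apply Lgen_pos; auto. intros; unfold one; lra.
  - apply Lgen_one_le1; auto.
Qed.

Section FixedClass.
Variable j : nat.
Hypothesis Hj : (j < m)%nat.

Lemma h_cont : cont_on l A (h j).
Proof.
  apply unif_lim_cont with (fn := approx j); [apply approx_cont|].
  intros eps He. destruct (Hh j Hj eps He) as [N HN]. exists N. intros x Hx. apply HN; auto.
Qed.

(* 0 <= h_j <= e^{-NmP} + 1 for N witnessing uniform convergence up to 1. *)
Lemma h_bounds : exists H, forall x, InSigmaA l A x -> 0 <= h j x <= H.
Proof.
  destruct (Hh j Hj 1 ltac:(lra)) as [N HN]. set (c := exp (- (INR N * INR m * P))).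
  exists (c + 1). intros x Hx. split.
  - destruct (Rle_or_lt 0 (h j x)) as [H|H]; auto. exfalso.
    destruct (Hh j Hj (- h j x) ltac:(lra)) as [N' HN']. specialize (HN' N' x (le_n _) Hx).
    assert (0 <= exp (- (INR N' * INR m * P)) * opiter (L j) N' one x)
      by (apply Rmult_le_pos; [left; apply exp_pos | apply Lm_iter_one_bound; auto]).
    apply Rabs_def2 in HN'. lra.
  - specialize (HN N x (le_n _) Hx). apply Rabs_def2 in HN.
    destruct (Lm_iter_one_bound j N x Hx). assert (0 < c) by apply exp_pos.
    assert (c * opiter (L j) N one x <= c)
      by (rewrite <- (Rmult_1_r c) at 2; apply Rmult_le_compat_l; lra).
    fold c in HN. lra.
Qed.

(* Replacing h_j by a late approximant moves its image under any restricted transfer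
   operator by at most e (the operators are positive with L 1 <= 1). *)
Lemma Lgen_near_h e : 0 < e -> exists N0, forall N n C x, (N0 <= N)%nat -> InSigmaA l A x ->
  Rabs (Lgen l A phi n C (h j) x - Lgen l A phi n C (approx j N) x) <= e.
Proof.
  intros He. destruct (Hh j Hj e He) as [N0 HN]. exists N0. intros N n C x HN0 Hx.
  eapply Rle_trans; [apply Lgen_diff; auto|].
  - intros y Hy. rewrite Rabs_minus_sym. left. apply (HN N y HN0 Hy).
  - rewrite <- (Rmult_1_r e) at 2. apply Rmult_le_compat_l; [lra | apply Lgen_one_le1; auto].
Qed.

Lemma approx_step N x : L j (approx j N) x = lam * approx j (S N) x.
Proof.
  unfold approx. rewrite Lm_as_Lgen, Lgen_scal, <- Lm_as_Lgen. simpl opiter.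
  rewrite <- Rmult_assoc. f_equal. rewrite <- exp_plus. f_equal. rewrite S_INR. ring.
Qed.

Lemma h_eigen1 x : InSigmaA l A x -> L j (h j) x = lam * h j x.
Proof.
  intros Hx. apply (eq_of_close (1 + lam)). intros e He.
  destruct (Lgen_near_h e He) as [N0 HN0]. destruct (Hh j Hj e He) as [N1 HN1].
  set (N := max N0 N1).
  specialize (HN0 N m (letters_ok (in_class Delta cls m j) m) x ltac:(unfold N; lia) Hx).
  rewrite <- !Lm_as_Lgen, approx_step in HN0.
  specialize (HN1 (S N) x ltac:(unfold N; lia) Hx). fold (approx j (S N) x) in HN1.
  replace (L j (h j) x - lam * h j x)
    with ((L j (h j) x - lam * approx j (S N) x) + lam * (approx j (S N) x - h j x)) by ring.
  eapply Rle_trans; [apply Rabs_triang|].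
  rewrite Rabs_mult, (Rabs_pos_eq lam) by (left; apply exp_pos).
  assert (lam * Rabs (approx j (S N) x - h j x) <= lam * e)
    by (apply Rmult_le_compat_l; [left; apply exp_pos | lra]).
  lra.
Qed.

Lemma h_eigen : is_eigen l A phi Delta m cls P j (h j).
Proof.
  intros n. induction n; intros x Hx; [simpl; ring|].
  change (L j (opiter (L j) n (h j)) x = lam ^ S n * h j x).
  rewrite Lm_as_Lgen, (Lgen_ext_Sigma _ _ _ _ _ _ (fun y => lam ^ n * h j y)) by auto.
  rewrite Lgen_scal, <- Lm_as_Lgen, h_eigen1 by auto. simpl. ring.
Qed.

(* Growth bound: (L^(m)_j)^n 1 <= (h_j + 1) lam^n for all large n. *)
Lemma Lm_iter_growth x : InSigmaA l A x -> exists B, forall N0, exists n,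
  (N0 <= n)%nat /\ opiter (L j) n one x <= B * lam ^ n.
Proof.
  intros Hx. destruct (Hh j Hj 1 ltac:(lra)) as [N HN]. exists (h j x + 1). intros N0.
  exists (max N N0). split; [lia|]. specialize (HN (max N N0) x ltac:(lia) Hx).
  apply Rabs_def2 in HN. pose proof (lam_pow_inv (max N N0)) as K.
  assert (Hl : 0 < lam ^ (max N N0)) by (apply pow_lt, exp_pos).
  replace (opiter (L j) (max N N0) one x) with
    (exp (- (INR (max N N0) * INR m * P)) * opiter (L j) (max N N0) one x * lam ^ (max N N0))
    by (rewrite Rmult_comm, <- Rmult_assoc, (Rmult_comm (lam ^ _)), K; ring).
  apply Rmult_le_compat_r; lra.
Qed.

Lemma nu_eigen_iter n psi : cont_on l A psi -> nu j (opiter (L j) n psi) = lam ^ n * nu j psi.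
Proof.
  intros Hp. induction n; [simpl; ring|].
  change (nu j (L j (opiter (L j) n psi)) = lam ^ S n * nu j psi).
  rewrite Hnu_eig, IHn by (auto; apply Lm_iter_cont; auto). simpl. ring.
Qed.

Lemma nu_h : nu j (h j) = 1.
Proof.
  assert (Happrox : forall n, nu j (approx j n) = 1).
  { intros n. unfold approx.
    rewrite (nu_scal l A), nu_eigen_iter by (auto; apply cont_one || apply Lm_iter_cont, cont_one).
    destruct (Hnu_prob j Hj) as [_ [_ [_ H4]]]. rewrite H4, <- Rmult_assoc, lam_pow_inv. ring. }
  apply (eq_of_close 1). intros e He. destruct (Hh j Hj e He) as [N HN].
  rewrite Rmult_1_l, <- (Happrox N). apply (nu_close l A); auto using h_cont, approx_cont.
  intros x Hx. rewrite Rabs_minus_sym. left. apply HN; auto.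
Qed.

(* Since nu_j(h_j) = 1 and nu_j lives on Omega_j, h_j is positive somewhere on Omega_j. *)
Lemma h_pos_somewhere : exists z0, InOmega l A Delta cls j z0 /\ 0 < h j z0.
Proof.
  apply NNPP. intros Hn. destruct h_bounds as [H Hb].
  assert (H0 : nu j (h j) = 0).
  { apply (Hnu_supp j Hj); [apply h_cont|]. intros x Hx.
    destruct (Hb x (Omega_Sigma l A Delta cls j x Hx)) as [[Hp|Hp] _]; [|auto].
    exfalso. apply Hn. exists x. auto. }
  rewrite nu_h in H0. lra.
Qed.

End FixedClass.

(** * L_Delta^k h_j is a multiple of h_{j+k} *)

Section Transport.
Variables (j k : nat).
Hypothesis Hj : (j < m)%nat.

Local Notation i := ((j + k) mod m)%nat.

Lemma target_class : (i < m)%nat.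
Proof. apply Nat.mod_upper_bound. lia. Qed.

(* By the commutation relation, L_Delta^k h_j is a lam-eigenfunction of L^(m)_{j+k}. *)
Lemma LD_h_eigen : is_eigen l A phi Delta m cls P i (opiter LD k (h j)).
Proof.
  intros n x Hx. rewrite commute_iter by auto. rewrite !opiter_LDelta.
  rewrite (Lgen_ext_Sigma _ _ _ _ _ _ (fun z => lam ^ n * h j z)) by (auto; apply h_eigen; auto).
  apply Lgen_scal.
Qed.

(* nu_{j+k}(L_Delta^k h_j) = nu_{j+k}(L_Delta^k 1): approximate h_j by lam^-N L_j^N 1, move
   L_j^N through L_Delta^k and use the eigen-equation of nu_{j+k}. *)
Lemma nu_LD_h : nu i (opiter LD k (h j)) = nu i (opiter LD k one).
Proof.
  pose proof target_class as Hi.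
  assert (Happrox : forall N, nu i (opiter LD k (approx j N)) = nu i (opiter LD k one)).
  { intros N.
    replace (opiter LD k (approx j N))
      with (fun y => exp (- (INR N * INR m * P)) * opiter (L i) N (opiter LD k one) y).
    - rewrite (nu_scal l A), nu_eigen_iter, <- Rmult_assoc, lam_pow_inv by
        (auto; apply LD_iter_cont, cont_one || apply Lm_iter_cont, LD_iter_cont, cont_one).
      ring.
    - rewrite commute_iter by auto. apply functional_extensionality; intros y.
      unfold approx. rewrite !opiter_LDelta. symmetry. apply Lgen_scal. }
  apply (eq_of_close 1). intros e He. rewrite Rmult_1_l.
  destruct (Lgen_near_h j Hj e He) as [N HN]. rewrite <- (Happrox N).
  apply (nu_close l A); auto using LD_iter_cont, h_cont, approx_cont.
  intros x Hx. rewrite !opiter_LDelta. apply HN; auto.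
Qed.

Theorem LD_h_multiple x : InSigmaA l A x ->
  opiter LD k (h j) x = nu i (opiter LD k one) * h i x.
Proof.
  pose proof target_class as Hi.
  destruct (eigen_unique l A phi Delta m cls P i Hphi Hm HDsub HDirr Hcls_rng Hcls_cyc Hi
              (opiter LD k (h j)) (h i)) as [t Ht];
    auto using LD_iter_cont, h_cont, h_bounds, h_pos_somewhere, h_eigen, LD_h_eigen, Lm_iter_growth.
  - intros y Hy. rewrite opiter_LDelta. apply Lgen_pos; auto.
    intros z Hz. destruct (h_bounds j Hj) as [H Hb]. apply Hb; auto.
  - assert (Hnu : nu i (opiter LD k (h j)) = t).
    { rewrite (nu_ext l A (nu i) (Hnu_prob i Hi) _ (fun y => t * h i y));
        auto using LD_iter_cont, h_cont, cont_scal.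
      rewrite (nu_scal l A), nu_h by auto using h_cont. ring. }
    rewrite <- nu_LD_h, Hnu. apply Ht.
Qed.

End Transport.
End Eigendata.

Theorem mainTheorem4
  (l : nat) (A : nat -> nat -> bool) (phi : seqn -> R)
  (Delta : nat -> bool) (m : nat) (cls : nat -> nat) (P : R)
  (h : nat -> seqn -> R) (nu : nat -> (seqn -> R) -> R)
  (* A irreducible aperiodic *)
  (HAirr : irreducible l A (fullV l))
  (HAaper : aperiodic l A)
  (* phi Hoelder and normalised *)
  (Hphi : holder l A phi)
  (Hnorm : forall x, InSigmaA l A x -> Lphi l A phi one x = 1)
  (* Delta a proper subset of V, A|Delta irreducible of period m >= 2 *)
  (HDsub : forall i, Delta i = true -> (i < l)%nat)
  (HDproper : exists i, (i < l)%nat /\ Delta i = false)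
  (HDne : exists i, Delta i = true)
  (HDirr : irreducible l A Delta)
  (Hm : (2 <= m)%nat)
  (HDper : forall i, Delta i = true -> is_period l A Delta i m)
  (* cyclic decomposition Delta_s = {i in Delta : cls i = s} *)
  (Hcls_rng : forall i, Delta i = true -> (cls i < m)%nat)
  (Hcls_cyc : forall i i', Delta i = true -> Delta i' = true -> A i i' = true ->
                cls i' = ((cls i + 1) mod m)%nat)
  (* P = P_Delta *)
  (HP : is_pressure l A Delta phi P)
  (* h_j = uniform limit of e^{-nmP} (L^{(m)}_j)^n 1 on Sigma_A^+ *)
  (Hh : forall j, (j < m)%nat -> forall eps, 0 < eps -> exists N, forall n x,
          (N <= n)%nat -> InSigmaA l A x ->
          Rabs (exp (- (INR n * INR m * P)) * opiter (Lm l A phi Delta cls m j) n one x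
                - h j x) < eps)
  (* nu_j : Borel probability supported on Omega_j with the eigen-equation *)
  (Hnu_prob : forall j, (j < m)%nat -> prob_functional l A (nu j))
  (Hnu_supp : forall j, (j < m)%nat -> supported_on_Omega l A Delta cls j (nu j))
  (Hnu_eig : forall j, (j < m)%nat -> forall psi, cont_on l A psi ->
               nu j (Lm l A phi Delta cls m j psi) = exp (INR m * P) * nu j psi) :
  forall j k, (j < m)%nat -> (1 <= k)%nat ->
  forall x, InSigmaA l A x ->
    opiter (LDelta l A phi Delta) k (h j) x =
    nu ((j + k) mod m)%nat (opiter (LDelta l A phi Delta) k one)
    * h ((j + k) mod m)%nat x.
Proof.
  intros j k Hj _ x Hx.
  apply (LD_h_multiple l A phi Delta m cls P h nu); auto. lia.
Qed.
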